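(* Let $\sigma>0$, $\varepsilon>0$, $T>0$, $0<c<M$, $0<\Delta x\le 1$. Let $(\tau_i(t),u_i(t))_{i\in\mathbb Z}$ be a $C^1$-in-time solution on $[0,T)$ of the semi-discrete scheme (H) and $(\bar\tau_i(t),\bar u_i(t))_{i\in\mathbb Z}$ a $C^1$-in-time solution on $[0,T)$ of the semi-discrete scheme (P), with the same $\lambda$ defined from $(\tau_i)$ as in the context. Assume $c\le\tau_i(t),\bar\tau_i(t)\le M$ for all $i,t$; that $\lim_{i\to\pm\infty}\tau_i=\lim_{i\to\pm\infty}\bar\tau_i=\tau_\pm$ and $\lim_{i\to\pm\infty}u_i=\lim_{i\to\pm\infty}\bar u_i=0$ for constants $\tau_\pm>0$, with enough summability that $\phi^\varepsilon(t)$ is finite, differentiable in $t$, and all sums appearing may be rearranged termwise; that $\phi^\varepsilon(0)<\infty$; and that for some $K<\infty$, $$\|\tilde D_{tx}p(\bar\tau)\|_{L^2(Q_T)}\le K,\ \|\tilde D_{xx}p(\bar\tau)\|_{L^\infty(Q_T)}\le K,\ \|D_{xx}\bar\tau\|_{L^\infty(Q_T)}\le K,\ \|D_x\bar\tau\|_{L^\infty(Q_T)}\le K,\ \|D_{xx}\bar u\|_{L^2(Q_T)}\le K.$$ Then there is $B>0$, depending only on $K$, $\sigma$, $c$, $M$ and $p$ (not on $\varepsilon$), such that $$\phi^\varepsilon(t)\le Be^{BT}\big(\phi^\varepsilon(0)+\varepsilon^4\big),\qquad t\in[0,T).$$ Moreover, if $\phi^\varepsilon(0)\to0$ as $\varepsilon\to0$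 then $\sup_{t\in[0,T)}\phi^\varepsilon(t)\to0$.
   Context: The pressure $p\in C^2((0,\infty))$ satisfies $p>0$, $p'<0$. Fix $\tau_\star>0$, $P(\tau)=\int_{\tau_\star}^\tau p(s)ds$, $P(\tau|\bar\tau)=P(\tau)-P(\bar\tau)-p(\bar\tau)(\tau-\bar\tau)$. Uniform mesh of size $\Delta x$, $Q_T=\mathbb R\times[0,T)$, and $\lambda=\sup_{t\in(0,T)}\max_{i\in\mathbb Z}\sqrt{-p'(\tau_i(t))}$. Scheme (H): $\frac{d}{dt}\tau_i=\frac{1}{2\Delta x}(u_{i+1}-u_{i-1})+\frac{\lambda}{2\Delta x}(\tau_{i+1}-2\tau_i+\tau_{i-1})$, $\frac{d}{dt}u_i=\frac{\lambda}{2\Delta x}(u_{i+1}-2u_i+u_{i-1})-\frac{1}{2\varepsilon^2\Delta x}(p(\tau_{i+1})-p(\tau_{i-1}))-\frac{\sigma}{\varepsilon^2}u_i$. Scheme (P): $\frac{d}{dt}\bar\tau_i=\frac{1}{2\Delta x}(\bar u_{i+1}-\bar u_{i-1})+\frac{\lambda}{2\Delta x}(\bar\tau_{i+1}-2\bar\tau_i+\bar\tau_{i-1})$, $\sigma\bar u_i=-\frac{p(\bar\tau_{i+1})-p(\bar\tau_{i-1})}{2\Delta x}$. Discrete relative entropy $\eta_i^\varepsilon=\frac{\varepsilon^2}{2}(u_i-\bar u_i)^2-P(\tau_i|\bar\tau_i)$ and $\phi^\varepsilon(t)=\sum_{i\in\mathbb Z}\Delta x\,\eta_i^\varepsilon(t)$.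 For $v=(v_i(t))$: $\|D_xv\|_{L^\infty(Q_T)}=\sup_{t,i}|\frac{v_{i+1}-v_i}{\Delta x}|$; $\|\tilde D_{xx}v\|_{L^\infty(Q_T)}=\sup_{t,i}|\frac{v_{i+2}-2v_i+v_{i-2}}{(2\Delta x)^2}|$; $\|D_{xx}v\|_{L^\infty(Q_T)}=\sup_{t,i}|\frac{v_{i+1}-2v_i+v_{i-1}}{(\Delta x)^2}|$; $\|\tilde D_{tx}v\|_{L^2(Q_T)}=\big(\int_0^T\sum_i\Delta x|\frac{d}{dt}\frac{v_{i+1}-v_{i-1}}{2\Delta x}|^2ds\big)^{1/2}$; $\|D_{xx}v\|_{L^2(Q_T)}=\big(\int_0^T\sum_i\Delta x|\frac{v_{i+1}-2v_i+v_{i-1}}{(\Delta x)^2}|^2ds\big)^{1/2}$. Here $p(\bar\tau)$ denotes the sequence $(p(\bar\tau_i(t)))_i$. *)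

From Stdlib Require Import Reals Lra ZArith Classical ClassicalEpsilon.
Open Scope R_scope.

(* Riemann integral of f from a to b (0 if f is not Riemann integrable;
   RiemannInt does not depend on the integrability proof). *)
Definition Rint (f : R -> R) (a b : R) : R :=
  match excluded_middle_informative (inhabited (Riemann_integrable f a b)) with
  | left H => RiemannInt (epsilon H (fun _ => True))
  | right _ => 0
  end.

Definition Ppot (p : R -> R) (tstar x : R) : R := Rint p tstar x.

Definition Prel (p : R -> R) (tstar x xb : R) : R :=
  Ppot p tstar x - Ppot p tstar xb - p xb * (x - xb).

Definition Zsum (f : Z -> R) (l : R) : Prop :=
  exists l1 l2,
    infinite_sum (fun n => f (Z.of_nat n)) l1 /\
    infinite_sum (fun n => f (- Z.of_nat (S n))%Z) l2 /\
    l = l1 + l2.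

Definition Zsq_summable (f : Z -> R) : Prop :=
  exists l, Zsum (fun i => (f i) ^ 2) l.

Definition Zfinsum (N : nat) (f : Z -> R) : R :=
  sum_f_R0 (fun k => f (Z.of_nat k - Z.of_nat N)%Z) (2 * N).

Definition within_cont (f : R -> R) (T t : R) : Prop :=
  limit1_in f (fun s => 0 <= s < T) (f t) t.

Definition C1_time (f df : R -> R) (T : R) : Prop :=
  (forall t, 0 < t < T -> derivable_pt_lim f t (df t)) /\
  (forall t, 0 <= t < T -> within_cont f T t /\ within_cont df T t).

Definition eta (p : R -> R) (tstar eps : R) (tau u taub ub : Z -> R -> R)
  (i : Z) (t : R) : R :=
  eps ^ 2 / 2 * (u i t - ub i t) ^ 2 - Prel p tstar (tau i t) (taub i t).

Definition Dx (dx : R) (v : Z -> R -> R) (i : Z) (t : R) : R :=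
  (v (i + 1)%Z t - v i t) / dx.
Definition Dxx (dx : R) (v : Z -> R -> R) (i : Z) (t : R) : R :=
  (v (i + 1)%Z t - 2 * v i t + v (i - 1)%Z t) / dx ^ 2.
Definition Dxx_tilde (dx : R) (v : Z -> R -> R) (i : Z) (t : R) : R :=
  (v (i + 2)%Z t - 2 * v i t + v (i - 2)%Z t) / (2 * dx) ^ 2.
(* d/dt of (v_{i+1}-v_{i-1})/(2dx), given the time derivative dv of v *)
Definition Dtx_tilde (dx : R) (dv : Z -> R -> R) (i : Z) (t : R) : R :=
  (dv (i + 1)%Z t - dv (i - 1)%Z t) / (2 * dx).

Definition Linf_le (T : R) (g : Z -> R -> R) (K : R) : Prop :=
  forall i t, 0 <= t < T -> Rabs (g i t) <= K.

(* (int_0^T sum_i dx |g_i|^2)^(1/2) <= K, via truncations in i and in time *)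
Definition L2_le (T dx : R) (g : Z -> R -> R) (K : R) : Prop :=
  0 <= K /\
  forall (N : nat) (T' : R), 0 <= T' < T ->
  forall pr : Riemann_integrable (fun s => Zfinsum N (fun i => dx * (g i s) ^ 2)) 0 T',
    RiemannInt pr <= K ^ 2.

Definition lambda_def (dp : R -> R) (tau : Z -> R -> R) (T lam : R) : Prop :=
  is_lub (fun y => exists t i, 0 < t < T /\ y = sqrt (- dp (tau i t))) lam.

Definition setting (p dp : R -> R) (tstar sigma c M K T eps dx lam : R)
  (tau u taub ub dtau du dtaub dub : Z -> R -> R) (Phi : R -> R) : Prop :=
  0 < tstar /\ 0 < T /\ 0 < eps /\ 0 < dx /\ dx <= 1 /\
  lambda_def dp tau T lam /\
  (forall i, C1_time (tau i) (dtau i) T /\ C1_time (u i) (du i) T /\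
             C1_time (taub i) (dtaub i) T /\ C1_time (ub i) (dub i) T) /\
  (* scheme (H) *)
  (forall i t, 0 < t < T ->
     dtau i t = (u (i + 1)%Z t - u (i - 1)%Z t) / (2 * dx)
                + lam / (2 * dx) * (tau (i + 1)%Z t - 2 * tau i t + tau (i - 1)%Z t) /\
     du i t = lam / (2 * dx) * (u (i + 1)%Z t - 2 * u i t + u (i - 1)%Z t)
              - 1 / (2 * eps ^ 2 * dx) * (p (tau (i + 1)%Z t) - p (tau (i - 1)%Z t))
              - sigma / eps ^ 2 * u i t) /\
  (* scheme (P) *)
  (forall i t, 0 < t < T ->
     dtaub i t = (ub (i + 1)%Z t - ub (i - 1)%Z t) / (2 * dx)
                 + lam / (2 * dx) * (taub (i + 1)%Z t - 2 * taub i t + taub (i - 1)%Z t)) /\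
  (forall i t, 0 <= t < T ->
     sigma * ub i t = - (p (taub (i + 1)%Z t) - p (taub (i - 1)%Z t)) / (2 * dx)) /\
  (forall i t, 0 <= t < T ->
     c <= tau i t <= M /\ c <= taub i t <= M) /\
  (exists taum taup, 0 < taum /\ 0 < taup /\
     forall t, 0 <= t < T ->
       Un_cv (fun n => tau (Z.of_nat n) t) taup /\
       Un_cv (fun n => tau (- Z.of_nat n)%Z t) taum /\
       Un_cv (fun n => taub (Z.of_nat n) t) taup /\
       Un_cv (fun n => taub (- Z.of_nat n)%Z t) taum /\
       Un_cv (fun n => u (Z.of_nat n) t) 0 /\
       Un_cv (fun n => u (- Z.of_nat n)%Z t) 0 /\
       Un_cv (fun n => ub (Z.of_nat n) t) 0 /\
       Un_cv (fun n => ub (- Z.of_nat n)%Z t) 0) /\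
  (forall t, 0 <= t < T ->
     Zsq_summable (fun i => tau i t - taub i t) /\
     Zsq_summable (fun i => u i t - ub i t) /\
     Zsq_summable (fun i => taub (i + 1)%Z t - taub i t)) /\
  (forall t, 0 <= t < T ->
     Zsum (fun i => dx * eta p tstar eps tau u taub ub i t) (Phi t)) /\
  within_cont Phi T 0 /\
  (forall t, 0 < t < T ->
     exists (g : Z -> R) (l : R),
       (forall i, derivable_pt_lim (fun s => dx * eta p tstar eps tau u taub ub i s) t (g i)) /\
       Zsum g l /\ derivable_pt_lim Phi t l) /\
  L2_le T dx (Dtx_tilde dx (fun i t => dp (taub i t) * dtaub i t)) K /\
  Linf_le T (Dxx_tilde dx (fun i t => p (taub i t))) K /\
  Linf_le T (Dxx dx taub) K /\
  Linf_le T (Dx dx taub) K /\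
  L2_le T dx (Dxx dx ub) K.

From Pilot Require Import Defs.
From Stdlib Require Import Reals ZArith Lra Lia Psatz Classical ClassicalEpsilon.
Open Scope R_scope.

(* Relative entropy method.  Up to a telescoping numerical flux, the time derivative of the
   local relative entropy [eta_i] is bounded by [C ((tau_(i-1) - taub_(i-1))^2 + (tau_i - taub_i)^2)]
   plus [eps^4] times the squares of the parabolic residuals [D_xx ub] and [D~_tx p(taub)]: the
   relaxation term [- sigma (u_i - ub_i)^2] absorbs the velocity cross terms by Young's inequality,
   and the numerical viscosity is controlled by Taylor expansions of [p] together with the bound
   on [D_x taub] (distinguishing [K dx <= c/2] from [K dx > c/2]).  Since [- P(.|.)] is uniformly
   convex on [[c, M]], these quadratic terms are at most [C eta].  Summing over [i], the fluxes
   vanish at infinity, and a Gronwall argument using the space-time L^2 bounds on the residuals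
   gives [phi(t) <= e^(B t) (phi(0) + B eps^4)], from which the second claim follows. *)

Lemma Rabs_le_inv x y : Rabs x <= y -> - y <= x <= y.
Proof. unfold Rabs; destruct (Rcase_abs x); lra. Qed.

Lemma Rabs_sub_le x y : Rabs (x - y) <= Rabs x + Rabs y.
Proof. unfold Rminus; rewrite <- (Rabs_Ropp y); apply Rabs_triang. Qed.

Lemma Rdiv_nonneg_pos x y : 0 <= x -> 0 < y -> 0 <= x / y.
Proof. intros; apply Rmult_le_pos; [| apply Rlt_le, Rinv_0_lt_compat]; assumption. Qed.

Lemma bound_nonneg (f : R -> R) a b D :
  a <= b -> (forall x, a <= x <= b -> Rabs (f x) <= D) -> 0 <= D.
Proof. intros Hab H. eapply Rle_trans; [apply Rabs_pos | apply (H a); lra]. Qed.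

Lemma derivable_pt_lim_eq f x l1 l2 :
  derivable_pt_lim f x l1 -> l1 = l2 -> derivable_pt_lim f x l2.
Proof. now intros ? <-. Qed.

Lemma derivable_pt_lim_sqr f x l :
  derivable_pt_lim f x l -> derivable_pt_lim (fun s => f s ^ 2) x (2 * f x * l).
Proof.
  intros H. apply (derivable_pt_lim_locally_ext (fun s => f s * f s) _ x (x - 1) (x + 1)).
  - lra.
  - intros; ring.
  - eapply derivable_pt_lim_eq; [apply (derivable_pt_lim_mult f f x l l H H)| ring].
Qed.

Ltac derive_rec :=
  lazymatch goal with
  | |- derivable_pt_lim (fun s => @?f s + @?g s) _ _ =>
      eapply derivable_pt_lim_eq; [apply (derivable_pt_lim_plus f g); derive_rec | reflexivity]
  | |- derivable_pt_lim (fun s => @?f s - @?g s) _ _ =>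
      eapply derivable_pt_lim_eq; [apply (derivable_pt_lim_minus f g); derive_rec | reflexivity]
  | |- derivable_pt_lim (fun s => @?f s * @?g s) _ _ =>
      eapply derivable_pt_lim_eq; [apply (derivable_pt_lim_mult f g); derive_rec | reflexivity]
  | |- derivable_pt_lim (fun s => - @?f s) _ _ =>
      eapply derivable_pt_lim_eq; [apply (derivable_pt_lim_opp f); derive_rec | reflexivity]
  | |- derivable_pt_lim (fun s => (@?f s) ^ 2) _ _ =>
      eapply derivable_pt_lim_eq; [apply (derivable_pt_lim_sqr f); derive_rec | reflexivity]
  | |- derivable_pt_lim (fun s => s) _ _ => apply derivable_pt_lim_id
  | |- derivable_pt_lim (fun _ => ?a) _ _ => apply derivable_pt_lim_const
  | _ => idtac
  end.

(* Leaves the leaf derivatives and the equation [computed = expected] as goals. *)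
Ltac derive := eapply derivable_pt_lim_eq; [derive_rec |].

Lemma MVT_between f f' a b :
  (forall z, Rmin a b <= z <= Rmax a b -> derivable_pt_lim f z (f' z)) ->
  exists z, Rmin a b <= z <= Rmax a b /\ f b - f a = f' z * (b - a).
Proof.
  intros H. destruct (Rtotal_order a b) as [Hab | [<- | Hab]].
  - rewrite Rmin_left, Rmax_right in * by lra.
    destruct (MVT_cor2 f f' a b Hab H) as [z [E Hz]]. exists z; split; [lra | exact E].
  - exists a; rewrite Rmin_left, Rmax_left by lra; split; [lra | ring].
  - rewrite Rmin_right, Rmax_left in * by lra.
    destruct (MVT_cor2 f f' b a Hab H) as [z [E Hz]]. exists z; split; lra.
Qed.

Lemma between_in_interval lo hi x y z :
  lo <= x <= hi -> lo <= y <= hi -> Rmin x y <= z <= Rmax x y -> lo <= z <= hi.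
Proof. unfold Rmin, Rmax; destruct (Rle_dec x y); lra. Qed.

Lemma between_dist_le x y z : Rmin x y <= z <= Rmax x y -> Rabs (z - x) <= Rabs (y - x).
Proof.
  unfold Rmin, Rmax; intros Hz; apply Rabs_le.
  destruct (Rle_dec x y); [rewrite Rabs_right | rewrite Rabs_left]; lra.
Qed.

Lemma Lipschitz_of_derivative_bound f f' lo hi D x y :
  (forall z, lo <= z <= hi -> derivable_pt_lim f z (f' z) /\ Rabs (f' z) <= D) ->
  lo <= x <= hi -> lo <= y <= hi -> Rabs (f x - f y) <= D * Rabs (x - y).
Proof.
  intros H Hx Hy.
  destruct (MVT_between f f' y x) as [z [Hz E]].
  { intros z Hz; apply H; exact (between_in_interval lo hi y x z Hy Hx Hz). }
  rewrite E, Rabs_mult. apply Rmult_le_compat_r; [apply Rabs_pos |].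
  apply H; exact (between_in_interval lo hi y x z Hy Hx Hz).
Qed.

Lemma derivable_pt_lim_shift f a s l :
  derivable_pt_lim f (a + s) l -> derivable_pt_lim (fun s => f (a + s)) s l.
Proof.
  intros H. eapply derivable_pt_lim_eq.
  - apply (derivable_pt_lim_comp (fun s => a + s) f); [| exact H].
    derive; [reflexivity].
  - ring.
Qed.

Lemma Young_mult_le s a b : 0 < s -> a * b <= s / 4 * a ^ 2 + b ^ 2 / s.
Proof.
  intros Hs. apply (Rmult_le_reg_l (4 * s)); [lra |].
  replace (4 * s * (s / 4 * a ^ 2 + b ^ 2 / s)) with (s ^ 2 * a ^ 2 + 4 * b ^ 2) by (field; lra).
  pose proof (pow2_ge_0 (s * a - 2 * b)). nra.
Qed.

Lemma Rint_eq_RiemannInt f a b (pr : Riemann_integrable f a b) : Rint f a b = RiemannInt pr.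
Proof.
  unfold Rint. destruct excluded_middle_informative as [H | H].
  - apply RiemannInt_P5.
  - exfalso; apply H; constructor; exact pr.
Qed.

Lemma exp_le_mono x y : x <= y -> exp x <= exp y.
Proof. intros [H | ->]; [left; apply exp_increasing; exact H | right; reflexivity]. Qed.

(** * The pressure law *)

Lemma continuous_abs_bounded f a b :
  a <= b -> (forall x, a <= x <= b -> continuity_pt f x) ->
  exists D, 0 <= D /\ forall x, a <= x <= b -> Rabs (f x) <= D.
Proof.
  intros Hab Hf.
  destruct (continuity_ab_maj f a b Hab Hf) as [xM [HM _]].
  destruct (continuity_ab_min f a b Hab Hf) as [xm [Hm _]].
  exists (Rmax (Rabs (f xM)) (Rabs (f xm))). split.
  - eapply Rle_trans; [apply Rabs_pos | apply Rmax_l].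
  - intros x Hx. specialize (HM x Hx). specialize (Hm x Hx).
    pose proof (Rmax_l (Rabs (f xM)) (Rabs (f xm))). pose proof (Rmax_r (Rabs (f xM)) (Rabs (f xm))).
    pose proof (Rle_abs (f xM)). pose proof (Rle_abs (- f xm)). rewrite Rabs_Ropp in *.
    apply Rabs_le; lra.
Qed.

Lemma continuous_positive_min f a b :
  a <= b -> (forall x, a <= x <= b -> continuity_pt f x) -> (forall x, a <= x <= b -> 0 < f x) ->
  exists m, 0 < m /\ forall x, a <= x <= b -> m <= f x.
Proof.
  intros Hab Hf Hpos.
  destruct (continuity_ab_min f a b Hab Hf) as [xm [Hm Hxm]].
  exists (f xm); auto.
Qed.

Definition pressure_law (p dp d2p : R -> R) : Prop :=
  forall x, 0 < x ->
    derivable_pt_lim p x (dp x) /\ derivable_pt_lim dp x (d2p x) /\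
    continuity_pt d2p x /\ 0 < p x /\ dp x < 0.

Lemma Ppot_derivable p tstar x :
  (forall y, 0 < y -> continuity_pt p y) -> 0 < tstar -> 0 < x ->
  derivable_pt_lim (Ppot p tstar) x (p x).
Proof.
  intros Cp Ht Hx.
  set (a := Rmin tstar x / 2). set (b := Rmax tstar x + 1).
  pose proof (Rmin_l tstar x). pose proof (Rmin_r tstar x).
  pose proof (Rmax_l tstar x). pose proof (Rmax_r tstar x).
  assert (Ha : 0 < a) by (unfold a; apply Rmin_case; lra).
  assert (h : a <= b) by (unfold a, b; lra).
  assert (C0 : forall y, a <= y <= b -> continuity_pt p y) by (intros; apply Cp; lra).
  set (pr := FTC_P1 h C0).
  (* On (a, b), [Ppot p tstar] differs from the primitive of [p] by a constant. *)
  assert (E : forall z, a < z < b -> primitive h pr z - primitive h pr tstar = Ppot p tstar z).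
  { intros z Hz. unfold primitive.
    destruct (Rle_dec a z); [| lra]. destruct (Rle_dec z b); [| lra].
    destruct (Rle_dec a tstar); [| unfold a in *; lra].
    destruct (Rle_dec tstar b); [| unfold b in *; lra].
    set (pz := pr z r r0). set (pt := pr tstar r1 r2).
    set (ptz := RiemannInt_P24 (RiemannInt_P1 pt) pz).
    unfold Ppot. rewrite (Rint_eq_RiemannInt _ _ _ ptz).
    pose proof (RiemannInt_P26 pt ptz pz). lra. }
  apply (derivable_pt_lim_locally_ext (fun z => primitive h pr z - primitive h pr tstar) _ x a b); [unfold a, b; lra | exact E |].
  derive; [apply RiemannInt_P28; unfold a, b; lra | ring].
Qed.

(** * Local entropy balance *)

(* Numerical entropy flux through the interface between sites [i - 1] and [i]. *)
Definition entropy_flux (p dp : R -> R) (lam dx eps : R) (tau u taub ub : Z -> R) (i : Z) : R :=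
  let v0 := u (i - 1)%Z - ub (i - 1)%Z in
  let v1 := u i - ub i in
  - (v0 * (p (tau i) - p (taub i)) + (p (tau (i - 1)%Z) - p (taub (i - 1)%Z)) * v1) / (2 * dx)
  + eps ^ 2 * (lam / (2 * dx)) * (v0 * (v1 - v0))
  + lam / (2 * dx) * (- (p (tau (i - 1)%Z) - p (taub (i - 1)%Z)) * (tau i - tau (i - 1)%Z)
                      + dp (taub (i - 1)%Z) * (tau (i - 1)%Z - taub (i - 1)%Z) * (taub i - taub (i - 1)%Z)).

Definition entropy_rate (p dp : R -> R) (dx eps : R) (tau u taub ub dtau du dtaub dub : Z -> R) (i : Z) : R :=
  dx * (eps ^ 2 / 2 * (2 * (u i - ub i) * (du i - dub i))
        - ((p (tau i) - p (taub i)) * dtau i - dp (taub i) * (tau i - taub i) * dtaub i)).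

Lemma entropy_rate_identity p dp lam dx eps sigma (tau u taub ub dtau du dtaub dub : Z -> R) i :
  0 < dx -> 0 < eps ->
  dtau i = (u (i + 1)%Z - u (i - 1)%Z) / (2 * dx)
           + lam / (2 * dx) * (tau (i + 1)%Z - 2 * tau i + tau (i - 1)%Z) ->
  du i = lam / (2 * dx) * (u (i + 1)%Z - 2 * u i + u (i - 1)%Z)
         - 1 / (2 * eps ^ 2 * dx) * (p (tau (i + 1)%Z) - p (tau (i - 1)%Z)) - sigma / eps ^ 2 * u i ->
  dtaub i = (ub (i + 1)%Z - ub (i - 1)%Z) / (2 * dx)
            + lam / (2 * dx) * (taub (i + 1)%Z - 2 * taub i + taub (i - 1)%Z) ->
  sigma * ub i = - (p (taub (i + 1)%Z) - p (taub (i - 1)%Z)) / (2 * dx) ->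
  let v0 := u (i - 1)%Z - ub (i - 1)%Z in
  let v1 := u i - ub i in
  let a := tau (i - 1)%Z in let b := tau i in let ab := taub (i - 1)%Z in let bb := taub i in
  entropy_rate p dp dx eps tau u taub ub dtau du dtaub dub i =
  dx * ((entropy_flux p dp lam dx eps tau u taub ub (i + 1)%Z - entropy_flux p dp lam dx eps tau u taub ub i)
        - eps ^ 2 * (lam / (2 * dx)) * (v1 - v0) ^ 2 - sigma * v1 ^ 2
        + eps ^ 2 * (lam * dx / 2) * v1 * ((ub (i + 1)%Z - 2 * ub i + ub (i - 1)%Z) / dx ^ 2)
        - eps ^ 2 * v1 * dub i
        - (p b - p bb - dp bb * (b - bb)) * ((ub (i + 1)%Z - ub (i - 1)%Z) / (2 * dx))
        - lam / (2 * dx) * ((- (p b - p bb) + (p a - p ab)) * (b - a)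
                            - (- dp bb * (b - bb) + dp ab * (a - ab)) * (bb - ab))).
Proof.
  intros Hdx Heps Hdtau Hdu Hdtaub Hub v0 v1 a b ab bb.
  unfold entropy_rate, entropy_flux, v0, v1, a, b, ab, bb.
  replace (i + 1 - 1)%Z with i by lia. rewrite Hdtau, Hdu, Hdtaub.
  assert (E0 : sigma * ub i + (p (taub (i + 1)%Z) - p (taub (i - 1)%Z)) / (2 * dx) = 0)
    by (rewrite Hub; field; lra).
  (* The remaining terms in [v1] cancel thanks to the parabolic law for [ub i]. *)
  match goal with |- _ = ?rhs =>
    transitivity (rhs - dx * (u i - ub i) * (sigma * ub i + (p (taub (i + 1)%Z) - p (taub (i - 1)%Z)) / (2 * dx)))
  end.
  - field. lra.
  - rewrite E0. ring.
Qed.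

Lemma viscous_velocity_term_le eps lam L dx sigma v X :
  0 < sigma -> 0 <= lam <= L -> 0 < dx -> dx <= 1 ->
  eps ^ 2 * (lam * dx / 2) * v * X <= sigma / 4 * v ^ 2 + eps ^ 4 * (L ^ 2 / (4 * sigma) * X ^ 2).
Proof.
  intros Hsig Hlam Hdx Hdx1.
  replace (eps ^ 2 * (lam * dx / 2) * v * X) with (v * (eps ^ 2 * (lam * dx) * X / 2)) by field.
  eapply Rle_trans; [apply (Young_mult_le sigma); exact Hsig |].
  apply Rplus_le_compat_l.
  replace ((eps ^ 2 * (lam * dx) * X / 2) ^ 2 / sigma) with (eps ^ 4 * ((lam * dx) ^ 2 / (4 * sigma) * X ^ 2))
    by (field; lra).
  assert (0 <= eps ^ 4) by (replace (eps ^ 4) with ((eps ^ 2) ^ 2) by ring; apply pow2_ge_0).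
  apply Rmult_le_compat_l; [assumption |].
  apply Rmult_le_compat_r; [apply pow2_ge_0 |].
  apply Rmult_le_compat_r; [apply Rlt_le, Rinv_0_lt_compat; lra |].
  apply pow_incr. split; nra.
Qed.

Lemma parabolic_velocity_gradient_le (p : R -> R) sigma dx K (taub ub : Z -> R) i :
  0 < sigma -> 0 < dx ->
  (forall j, sigma * ub j = - (p (taub (j + 1)%Z) - p (taub (j - 1)%Z)) / (2 * dx)) ->
  Rabs ((p (taub (i + 2)%Z) - 2 * p (taub i) + p (taub (i - 2)%Z)) / (2 * dx) ^ 2) <= K ->
  Rabs ((ub (i + 1)%Z - ub (i - 1)%Z) / (2 * dx)) <= K / sigma.
Proof.
  intros Hsig Hdx Hub HDxx.
  pose proof (Hub (i + 1)%Z) as H2. pose proof (Hub (i - 1)%Z) as H0.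
  replace (i + 1 + 1)%Z with (i + 2)%Z in H2 by lia. replace (i + 1 - 1)%Z with i in H2 by lia.
  replace (i - 1 + 1)%Z with i in H0 by lia. replace (i - 1 - 1)%Z with (i - 2)%Z in H0 by lia.
  replace ((ub (i + 1)%Z - ub (i - 1)%Z) / (2 * dx))
    with (- ((p (taub (i + 2)%Z) - 2 * p (taub i) + p (taub (i - 2)%Z)) / (2 * dx) ^ 2) / sigma).
  - unfold Rdiv at 1. rewrite Rabs_mult, Rabs_Ropp, Rabs_inv, (Rabs_right sigma) by lra.
    apply Rmult_le_compat_r; [apply Rlt_le, Rinv_0_lt_compat; lra | exact HDxx].
  - apply (Rmult_eq_reg_l (sigma * (2 * dx))); [| nra].
    replace (sigma * (2 * dx) * ((ub (i + 1)%Z - ub (i - 1)%Z) / (2 * dx)))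
      with (sigma * ub (i + 1)%Z - sigma * ub (i - 1)%Z) by (field; lra).
    rewrite H2, H0. field. lra.
Qed.

Section Pressure.

Variables (p dp d2p : R -> R).
Hypothesis Hp : pressure_law p dp d2p.

Lemma p_derivable x : 0 < x -> derivable_pt_lim p x (dp x).
Proof. intros Hx; apply (Hp x Hx). Qed.
Lemma dp_derivable x : 0 < x -> derivable_pt_lim dp x (d2p x).
Proof. intros Hx; apply (Hp x Hx). Qed.
Lemma dp_negative x : 0 < x -> dp x < 0.
Proof. intros Hx; apply (Hp x Hx). Qed.
Lemma p_continuous x : 0 < x -> continuity_pt p x.
Proof. intros Hx; exact (derivable_continuous_pt _ _ (exist _ _ (p_derivable x Hx))). Qed.
Lemma dp_continuous x : 0 < x -> continuity_pt dp x.
Proof. intros Hx; exact (derivable_continuous_pt _ _ (exist _ _ (dp_derivable x Hx))). Qed.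

Lemma pressure_constants c M : 0 < c -> c < M ->
  exists m D1 D2, 0 < m /\ 0 <= D1 /\ 0 <= D2 /\
    (forall x, c <= x <= M -> m <= - dp x) /\
    (forall x, c <= x <= M -> Rabs (dp x) <= D1) /\
    (forall x, c / 2 <= x <= M + c / 2 -> Rabs (d2p x) <= D2).
Proof.
  intros Hc HcM.
  destruct (continuous_positive_min (fun x => - dp x) c M) as [m [Hm Hmb]];
    [lra | intros x Hx; apply continuity_pt_opp, dp_continuous; lra | |].
  { intros x Hx. pose proof (dp_negative x ltac:(lra)). lra. }
  destruct (continuous_abs_bounded dp c M) as [D1 [HD1 Hd1]];
    [lra | intros x Hx; apply dp_continuous; lra |].
  destruct (continuous_abs_bounded d2p (c / 2) (M + c / 2)) as [D2 [HD2 Hd2]];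
    [lra | intros x Hx; apply (Hp x ltac:(lra)) |].
  exists m, D1, D2; repeat split; auto.
Qed.

Variables (c M m D1 D2 : R).
Hypotheses (Hc : 0 < c) (HcM : c < M)
  (Hm : forall x, c <= x <= M -> m <= - dp x)
  (Hd1 : forall x, c <= x <= M -> Rabs (dp x) <= D1)
  (Hd2 : forall x, c / 2 <= x <= M + c / 2 -> Rabs (d2p x) <= D2).

Let HD1 : 0 <= D1 := bound_nonneg dp c M D1 ltac:(lra) Hd1.
Let HD2 : 0 <= D2 := bound_nonneg d2p (c / 2) (M + c / 2) D2 ltac:(lra) Hd2.

Lemma p_Lipschitz x y : c <= x <= M -> c <= y <= M -> Rabs (p x - p y) <= D1 * Rabs (x - y).
Proof.
  apply (Lipschitz_of_derivative_bound p dp c M).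
  intros z Hz; split; [apply p_derivable; lra | auto].
Qed.

Lemma dp_Lipschitz x y : c / 2 <= x <= M + c / 2 -> c / 2 <= y <= M + c / 2 ->
  Rabs (dp x - dp y) <= D2 * Rabs (x - y).
Proof.
  apply (Lipschitz_of_derivative_bound dp d2p).
  intros z Hz; split; [apply dp_derivable; lra | auto].
Qed.

Lemma p_Taylor x y : c <= x <= M -> c <= y <= M ->
  Rabs (p x - p y - dp y * (x - y)) <= D2 * (x - y) ^ 2.
Proof.
  intros Hx Hy.
  destruct (MVT_between (fun z => p z - dp y * z) (fun z => dp z - dp y) y x) as [z [Hz E]].
  { intros z Hz. pose proof (between_in_interval c M y x z Hy Hx Hz).
    derive; [apply p_derivable; lra | ring]. }
  pose proof (between_in_interval c M y x z Hy Hx Hz).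
  replace (p x - p y - dp y * (x - y)) with ((dp z - dp y) * (x - y)) by lra.
  rewrite Rabs_mult, <- (pow2_abs (x - y)).
  pose proof (dp_Lipschitz z y ltac:(lra) ltac:(lra)).
  pose proof (between_dist_le y x z Hz).
  replace (D2 * Rabs (x - y) ^ 2) with (D2 * Rabs (x - y) * Rabs (x - y)) by ring.
  apply Rmult_le_compat_r; [apply Rabs_pos |].
  eapply Rle_trans; [eassumption | apply Rmult_le_compat_l; assumption].
Qed.

Lemma Prel_coercive tstar x y : 0 < tstar -> c <= x <= M -> c <= y <= M ->
  m / 2 * (x - y) ^ 2 <= - Prel p tstar x y.
Proof.
  intros Ht Hx Hy.
  destruct (MVT_between (fun z => - Prel p tstar z y - m / 2 * (z - y) ^ 2)
              (fun z => - (p z - p y) - m * (z - y)) y x) as [z [Hz E]].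
  { intros z Hz. pose proof (between_in_interval c M y x z Hy Hx Hz). unfold Prel.
    derive; [apply Ppot_derivable; auto; [intros; apply p_continuous | ]; lra | field]. }
  pose proof (between_in_interval c M y x z Hy Hx Hz) as Hz'.
  destruct (MVT_between p dp y z) as [w [Hw E2]].
  { intros w Hw. apply p_derivable. pose proof (between_in_interval c M y z w Hy Hz' Hw). lra. }
  pose proof (Hm w (between_in_interval c M y z w Hy Hz' Hw)).
  (* The derivative [(- dp w - m) (z - y)] has the sign of [x - y] since [z] lies between. *)
  assert (0 <= (z - y) * (x - y)) by (unfold Rmin, Rmax in Hz; destruct (Rle_dec y x); nra).
  unfold Prel in E at 2. rewrite E2 in E. nra.
Qed.

Lemma viscous_cross_small a b ab bb :
  c <= a <= M -> c <= b <= M -> c <= ab <= M -> c <= bb <= M -> Rabs (bb - ab) <= c / 2 ->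
  - (D2 * Rabs (a - ab) * Rabs (bb - ab) * Rabs ((b - bb) - (a - ab))) <=
  (- (p b - p bb) + (p a - p ab)) * ((b - bb) - (a - ab)).
Proof.
  intros Ha Hb Hab Hbb Hd.
  set (d := bb - ab) in *. set (dw := (b - bb) - (a - ab)).
  apply Rabs_le_inv in Hd.
  destruct (MVT_between p dp (a + d) b) as [xi [Hxi E1]].
  { intros z Hz. apply p_derivable; auto.
    unfold Rmin, Rmax in Hz. destruct (Rle_dec (a + d) b); lra. }
  assert (Hneg : dp xi < 0).
  { apply dp_negative.
    unfold Rmin, Rmax in Hxi; destruct (Rle_dec (a + d) b); lra. }
  destruct (MVT_between (fun s => p (a + s) - p (ab + s)) (fun s => dp (a + s) - dp (ab + s)) 0 d)
    as [th [Hth E2]].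
  { intros z Hz. unfold Rmin, Rmax in Hz.
    apply derivable_pt_lim_minus; apply derivable_pt_lim_shift, p_derivable; auto;
      destruct (Rle_dec 0 d); lra. }
  assert (Hth' : - (c / 2) <= th <= c / 2) by (unfold Rmin, Rmax in Hth; destruct (Rle_dec 0 d); lra).
  assert (Hq : Rabs (dp (a + th) - dp (ab + th)) <= D2 * Rabs (a - ab)).
  { replace (a - ab) with ((a + th) - (ab + th)) by ring. apply dp_Lipschitz; lra. }
  (* By the two mean values the product is [- dp xi dw^2 - (dp (a+th) - dp (ab+th)) d dw],
     and [- dp xi dw^2 >= 0]. *)
  replace (a + 0) with a in E2 by ring. replace (ab + 0) with ab in E2 by ring.
  replace (ab + d) with bb in E2 by (unfold d; ring).
  replace (b - (a + d)) with dw in E1 by (unfold dw, d; ring).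
  replace ((- (p b - p bb) + (p a - p ab)) * dw)
    with (- dp xi * dw ^ 2 - (dp (a + th) - dp (ab + th)) * d * dw) by
    (replace (p b) with (p (a + d) + dp xi * dw) by lra; nra).
  assert (Hr : Rabs ((dp (a + th) - dp (ab + th)) * d * dw) <= D2 * Rabs (a - ab) * Rabs d * Rabs dw).
  { rewrite !Rabs_mult. apply Rmult_le_compat_r; [apply Rabs_pos |].
    apply Rmult_le_compat_r; [apply Rabs_pos | exact Hq]. }
  apply Rabs_le_inv in Hr. pose proof (pow2_ge_0 dw). nra.
Qed.

Lemma viscous_cross_abs a b ab bb :
  c <= a <= M -> c <= b <= M -> c <= ab <= M -> c <= bb <= M ->
  Rabs ((- (p b - p bb) + (p a - p ab)) * ((b - bb) - (a - ab))) <=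
  2 * D1 * ((a - ab) ^ 2 + (b - bb) ^ 2).
Proof.
  intros Ha Hb Hab Hbb.
  pose proof (p_Lipschitz b bb Hb Hbb). pose proof (p_Lipschitz a ab Ha Hab).
  pose proof (Rabs_triang (- (p b - p bb)) (p a - p ab)). rewrite Rabs_Ropp in *.
  pose proof (Rabs_sub_le (b - bb) (a - ab)).
  rewrite <- (pow2_abs (a - ab)), <- (pow2_abs (b - bb)), Rabs_mult.
  set (A := Rabs (a - ab)) in *. set (B := Rabs (b - bb)) in *.
  assert (0 <= A) by apply Rabs_pos. assert (0 <= B) by apply Rabs_pos.
  apply Rle_trans with (D1 * (A + B) * (A + B)).
  - apply Rmult_le_compat; try apply Rabs_pos; [lra | lra].
  - pose proof (pow2_ge_0 (A - B)). nra.
Qed.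

Lemma viscous_remainder_lower K L lam dx a b ab bb :
  0 <= lam <= L -> 0 < dx ->
  c <= a <= M -> c <= b <= M -> c <= ab <= M -> c <= bb <= M -> Rabs (bb - ab) <= K * dx ->
  - (L * K * D2 / 2 * ((a - ab) ^ 2 + (b - bb) ^ 2)) <=
  lam / (2 * dx) * (((p a - p ab - dp ab * (a - ab)) - (p b - p bb - dp bb * (b - bb))) * (bb - ab)).
Proof.
  intros Hlam Hdx Ha Hb Hab Hbb Hd.
  set (W := (a - ab) ^ 2 + (b - bb) ^ 2).
  assert (HD2W : 0 <= D2 * W).
  { apply Rmult_le_pos; [exact HD2 |].
    apply Rplus_le_le_0_compat; apply pow2_ge_0. }
  assert (Hr : Rabs (((p a - p ab - dp ab * (a - ab)) - (p b - p bb - dp bb * (b - bb))) * (bb - ab))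
               <= D2 * W * (K * dx)).
  { rewrite Rabs_mult. apply Rmult_le_compat; try apply Rabs_pos; [| exact Hd].
    eapply Rle_trans; [apply Rabs_sub_le |].
    pose proof (p_Taylor a ab Ha Hab). pose proof (p_Taylor b bb Hb Hbb). unfold W. lra. }
  apply Rabs_le_inv in Hr.
  assert (HKdx : 0 <= K * dx) by (eapply Rle_trans; [apply Rabs_pos | exact Hd]).
  assert (lam / (2 * dx) <= L / (2 * dx)) by (apply Rmult_le_compat_r; [apply Rlt_le, Rinv_0_lt_compat |]; lra).
  replace (L * K * D2 / 2 * W) with (L / (2 * dx) * (D2 * W * (K * dx))) by (field; lra).
  apply Rle_trans with (lam / (2 * dx) * - (D2 * W * (K * dx))).
  - nra.
  - apply Rmult_le_compat_l; [apply Rdiv_nonneg_pos |]; lra.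
Qed.

Lemma viscous_cross_lower K L lam dx a b ab bb :
  0 <= K -> 0 <= lam <= L -> 0 < dx ->
  c <= a <= M -> c <= b <= M -> c <= ab <= M -> c <= bb <= M -> Rabs (bb - ab) <= K * dx ->
  - (L * K * (3 / 2 * D2 + 2 * D1 / c) * ((a - ab) ^ 2 + (b - bb) ^ 2)) <=
  lam / (2 * dx) * ((- (p b - p bb) + (p a - p ab)) * ((b - bb) - (a - ab))).
Proof.
  intros HK Hlam Hdx Ha Hb Hab Hbb Hd.
  set (W := (a - ab) ^ 2 + (b - bb) ^ 2).
  set (A := Rabs (a - ab)). set (B := Rabs (b - bb)).
  assert (0 <= A) by apply Rabs_pos. assert (0 <= B) by apply Rabs_pos.
  assert (HW : W = A ^ 2 + B ^ 2) by (unfold W, A, B; rewrite !pow2_abs; reflexivity).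
  assert (0 <= D1 / c) by (apply Rdiv_nonneg_pos; lra).
  assert (0 <= L * K) by nra.
  assert (0 <= lam / (2 * dx)) by (apply Rdiv_nonneg_pos; lra).
  assert (0 <= L * K * D2 * W) by (apply Rmult_le_pos; [apply Rmult_le_pos; lra | rewrite HW; nra]).
  assert (0 <= L * K * (2 * D1 / c) * W) by (apply Rmult_le_pos; [apply Rmult_le_pos; lra | rewrite HW; nra]).
  set (dG := - (p b - p bb) + (p a - p ab)). set (dw := (b - bb) - (a - ab)).
  destruct (Rle_dec (K * dx) (c / 2)) as [Hsmall | Hlarge].
  - (* Close by grid points: second differences of [p] are controlled by [d2p]. *)
    pose proof (viscous_cross_small a b ab bb Ha Hb Hab Hbb ltac:(lra)) as Hs. fold dG dw A in Hs.
    assert (Rabs dw <= B + A) by apply Rabs_sub_le.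
    assert (D2 * A * Rabs (bb - ab) * Rabs dw <= D2 * (K * dx) * (3 / 2 * W)).
    { rewrite HW. pose proof (Rabs_pos dw). pose proof (Rabs_pos (bb - ab)). pose proof (pow2_ge_0 (A - B)).
      assert (0 <= K * dx) by nra.
      apply Rle_trans with (D2 * ((K * dx) * (A * (A + B))));
        [| rewrite <- Rmult_assoc; apply Rmult_le_compat_l; [apply Rmult_le_pos |]; nra].
      replace (D2 * A * Rabs (bb - ab) * Rabs dw) with (D2 * (Rabs (bb - ab) * (A * Rabs dw))) by ring.
      apply Rmult_le_compat_l; [lra |]. apply Rmult_le_compat; nra. }
    assert (lam / (2 * dx) * (K * dx) <= L * K / 2)
      by (replace (lam / (2 * dx) * (K * dx)) with (lam * K / 2) by (field; lra); nra).
    assert (lam / (2 * dx) * (K * dx) * (3 / 2 * D2 * W) <= L * K / 2 * (3 / 2 * D2 * W))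
      by (apply Rmult_le_compat_r; [rewrite HW |]; nra).
    apply Rle_trans with (lam / (2 * dx) * - (D2 * (K * dx) * (3 / 2 * W))); [lra |].
    apply Rmult_le_compat_l; lra.
  - (* Distant grid points: [lam / dx] is then of order [L K / c]. *)
    apply Rnot_le_lt in Hlarge.
    pose proof (viscous_cross_abs a b ab bb Ha Hb Hab Hbb) as Hs. fold dG dw W in Hs.
    apply Rabs_le_inv in Hs.
    assert (Hk : lam / (2 * dx) <= L * K / c).
    { apply (Rmult_le_reg_r (2 * dx * c)); [nra |].
      replace (lam / (2 * dx) * (2 * dx * c)) with (lam * c) by (field; lra).
      replace (L * K / c * (2 * dx * c)) with (L * (2 * (K * dx))) by (field; lra). nra. }
    assert (lam / (2 * dx) * (2 * D1 * W) <= L * K * (2 * D1 / c) * W).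
    { replace (L * K * (2 * D1 / c) * W) with (L * K / c * (2 * D1 * W)) by (field; lra).
      apply Rmult_le_compat_r; [rewrite HW |]; nra. }
    apply Rle_trans with (lam / (2 * dx) * - (2 * D1 * W)); [lra |].
    apply Rmult_le_compat_l; lra.
Qed.

Lemma viscous_term_lower K L lam dx a b ab bb :
  0 <= K -> 0 <= lam <= L -> 0 < dx ->
  c <= a <= M -> c <= b <= M -> c <= ab <= M -> c <= bb <= M -> Rabs (bb - ab) <= K * dx ->
  - (L * K * (2 * D2 + 2 * D1 / c)) * ((a - ab) ^ 2 + (b - bb) ^ 2) <=
  lam / (2 * dx) * ((- (p b - p bb) + (p a - p ab)) * (b - a)
                     - (- dp bb * (b - bb) + dp ab * (a - ab)) * (bb - ab)).
Proof.
  intros HK Hlam Hdx Ha Hb Hab Hbb Hd.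
  pose proof (viscous_remainder_lower K L lam dx a b ab bb Hlam Hdx Ha Hb Hab Hbb Hd).
  pose proof (viscous_cross_lower K L lam dx a b ab bb HK Hlam Hdx Ha Hb Hab Hbb Hd).
  replace ((- (p b - p bb) + (p a - p ab)) * (b - a) - (- dp bb * (b - bb) + dp ab * (a - ab)) * (bb - ab))
    with ((- (p b - p bb) + (p a - p ab)) * ((b - bb) - (a - ab))
          + ((p a - p ab - dp ab * (a - ab)) - (p b - p bb - dp bb * (b - bb))) * (bb - ab)) by ring.
  rewrite Rmult_plus_distr_l. lra.
Qed.

Lemma local_entropy_balance K L lam dx eps sigma (tau u taub ub dtau du dtaub dub : Z -> R) Y i :
  0 <= K -> 0 <= lam <= L -> 0 < dx -> dx <= 1 -> 0 < eps -> 0 < sigma ->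
  (forall j, c <= tau j <= M /\ c <= taub j <= M) ->
  Rabs (taub i - taub (i - 1)%Z) <= K * dx ->
  Rabs ((p (taub (i + 2)%Z) - 2 * p (taub i) + p (taub (i - 2)%Z)) / (2 * dx) ^ 2) <= K ->
  (forall j, sigma * ub j = - (p (taub (j + 1)%Z) - p (taub (j - 1)%Z)) / (2 * dx)) ->
  dtau i = (u (i + 1)%Z - u (i - 1)%Z) / (2 * dx)
           + lam / (2 * dx) * (tau (i + 1)%Z - 2 * tau i + tau (i - 1)%Z) ->
  du i = lam / (2 * dx) * (u (i + 1)%Z - 2 * u i + u (i - 1)%Z)
         - 1 / (2 * eps ^ 2 * dx) * (p (tau (i + 1)%Z) - p (tau (i - 1)%Z)) - sigma / eps ^ 2 * u i ->
  dtaub i = (ub (i + 1)%Z - ub (i - 1)%Z) / (2 * dx)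
            + lam / (2 * dx) * (taub (i + 1)%Z - 2 * taub i + taub (i - 1)%Z) ->
  sigma * dub i = - Y ->
  entropy_rate p dp dx eps tau u taub ub dtau du dtaub dub i <=
  dx * (entropy_flux p dp lam dx eps tau u taub ub (i + 1)%Z - entropy_flux p dp lam dx eps tau u taub ub i)
  + (D2 * K / sigma + L * K * (2 * D2 + 2 * D1 / c)) * dx
    * ((tau (i - 1)%Z - taub (i - 1)%Z) ^ 2 + (tau i - taub i) ^ 2)
  + eps ^ 4 * dx * (L ^ 2 / (4 * sigma) * ((ub (i + 1)%Z - 2 * ub i + ub (i - 1)%Z) / dx ^ 2) ^ 2
                    + Y ^ 2 / sigma ^ 3).
Proof.
  intros HK Hlam Hdx Hdx1 Heps Hsig Hbnd HDx HDxx Hub Hdtau Hdu Hdtaub Hdub.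
  rewrite (entropy_rate_identity p dp lam dx eps sigma tau u taub ub dtau du dtaub dub i Hdx Heps
             Hdtau Hdu Hdtaub (Hub i)).
  cbv zeta.
  destruct (Hbnd (i - 1)%Z) as [Ht0 Htb0]. destruct (Hbnd i) as [Ht1 Htb1].
  set (v0 := u (i - 1)%Z - ub (i - 1)%Z). set (v1 := u i - ub i).
  set (X := (ub (i + 1)%Z - 2 * ub i + ub (i - 1)%Z) / dx ^ 2).
  assert (Hdiss : 0 <= eps ^ 2 * (lam / (2 * dx)) * (v1 - v0) ^ 2).
  { apply Rmult_le_pos; [apply Rmult_le_pos; [apply pow2_ge_0 | apply Rdiv_nonneg_pos; lra] | apply pow2_ge_0]. }
  pose proof (viscous_velocity_term_le eps lam L dx sigma v1 X Hsig Hlam Hdx Hdx1) as Hvisc1.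
  assert (Hsource : - (eps ^ 2 * v1 * dub i) <= sigma / 4 * v1 ^ 2 + eps ^ 4 * (Y ^ 2 / sigma ^ 3)).
  { assert (Hdub' : dub i = - Y / sigma) by (apply (Rmult_eq_reg_l sigma); [rewrite Hdub; field |]; lra).
    replace (- (eps ^ 2 * v1 * dub i)) with (v1 * (eps ^ 2 * Y / sigma)) by (rewrite Hdub'; field; lra).
    eapply Rle_trans; [apply (Young_mult_le sigma); exact Hsig |].
    right. field. lra. }
  assert (Hpres : - ((p (tau i) - p (taub i) - dp (taub i) * (tau i - taub i)) * ((ub (i + 1)%Z - ub (i - 1)%Z) / (2 * dx)))
                  <= D2 * K / sigma * (tau i - taub i) ^ 2).
  { pose proof (parabolic_velocity_gradient_le p sigma dx K taub ub i Hsig Hdx Hub HDxx) as HAq.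
    pose proof (p_Taylor (tau i) (taub i) Ht1 Htb1) as HT.
    assert (Hr : Rabs ((p (tau i) - p (taub i) - dp (taub i) * (tau i - taub i)) * ((ub (i + 1)%Z - ub (i - 1)%Z) / (2 * dx)))
                 <= D2 * (tau i - taub i) ^ 2 * (K / sigma)).
    { rewrite Rabs_mult. apply Rmult_le_compat; try apply Rabs_pos; assumption. }
    apply Rabs_le_inv in Hr.
    replace (D2 * K / sigma * (tau i - taub i) ^ 2) with (D2 * (tau i - taub i) ^ 2 * (K / sigma)) by (field; lra).
    lra. }
  pose proof (viscous_term_lower K L lam dx (tau (i - 1)%Z) (tau i) (taub (i - 1)%Z) (taub i)
                HK Hlam Hdx Ht0 Ht1 Htb0 Htb1 HDx) as Hvisc2.
  assert (0 <= sigma / 2 * v1 ^ 2) by (apply Rmult_le_pos; [lra | apply pow2_ge_0]).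
  assert (0 <= D2 * K / sigma * (tau (i - 1)%Z - taub (i - 1)%Z) ^ 2).
  { apply Rmult_le_pos; [apply Rdiv_nonneg_pos; [nra | lra] | apply pow2_ge_0]. }
  apply Rle_trans with (dx * (entropy_flux p dp lam dx eps tau u taub ub (i + 1)%Z
                              - entropy_flux p dp lam dx eps tau u taub ub i
                              + (D2 * K / sigma + L * K * (2 * D2 + 2 * D1 / c))
                                * ((tau (i - 1)%Z - taub (i - 1)%Z) ^ 2 + (tau i - taub i) ^ 2)
                              + eps ^ 4 * (L ^ 2 / (4 * sigma) * X ^ 2 + Y ^ 2 / sigma ^ 3))).
  - apply Rmult_le_compat_l; lra.
  - right. ring.
Qed.

End Pressure.

Definition Zrange_sum (f : Z -> R) (a : Z) (n : nat) : R := sum_f_R0 (fun k => f (a + Z.of_nat k)%Z) n.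

Lemma Zfinsum_Zrange_sum N f : Zfinsum N f = Zrange_sum f (- Z.of_nat N)%Z (2 * N).
Proof. apply sum_eq. intros k _. f_equal. lia. Qed.

Lemma Zrange_sum_S f a n : Zrange_sum f a (S n) = Zrange_sum f a n + f (a + Z.of_nat (S n))%Z.
Proof. reflexivity. Qed.

Lemma Zrange_sum_Sl f a n : Zrange_sum f a (S n) = f a + Zrange_sum f (a + 1)%Z n.
Proof.
  unfold Zrange_sum. rewrite decomp_sum by lia. simpl pred. rewrite Z.add_0_r. f_equal.
  apply sum_eq. intros k _. f_equal. lia.
Qed.

Lemma Zrange_sum_telescope F a n :
  Zrange_sum (fun i => F (i + 1)%Z - F i) a n = F (a + Z.of_nat n + 1)%Z - F a.
Proof.
  induction n as [| n IH].
  - unfold Zrange_sum; simpl. rewrite Z.add_0_r. ring.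
  - rewrite Zrange_sum_S, IH. replace (a + Z.of_nat (S n))%Z with (a + Z.of_nat n + 1)%Z by lia. ring.
Qed.

Lemma Zfinsum_plus f g N : Zfinsum N (fun i => f i + g i) = Zfinsum N f + Zfinsum N g.
Proof. unfold Zfinsum. induction (2 * N)%nat as [| n IH]; simpl; [| rewrite IH]; ring. Qed.

Lemma Zfinsum_scal r f N : Zfinsum N (fun i => r * f i) = r * Zfinsum N f.
Proof. unfold Zfinsum. induction (2 * N)%nat as [| n IH]; simpl; [| rewrite IH]; ring. Qed.

Lemma Zfinsum_le f g N : (forall i, f i <= g i) -> Zfinsum N f <= Zfinsum N g.
Proof. intros H. apply sum_Rle. intros; apply H. Qed.

Lemma Zfinsum_ext f g N : (forall i, f i = g i) -> Zfinsum N f = Zfinsum N g.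
Proof. intros H. apply sum_eq. intros; apply H. Qed.

Lemma Zfinsum_nonneg f N : (forall i, 0 <= f i) -> 0 <= Zfinsum N f.
Proof. intros H. apply cond_pos_sum. intros; apply H. Qed.

Lemma Zfinsum_telescope F N :
  Zfinsum N (fun i => F (i + 1)%Z - F i) = F (Z.of_nat N + 1)%Z - F (- Z.of_nat N)%Z.
Proof. rewrite Zfinsum_Zrange_sum, Zrange_sum_telescope. do 2 f_equal. lia. Qed.

Lemma Zfinsum_S f N : Zfinsum (S N) f = f (- Z.of_nat (S N))%Z + Zfinsum N f + f (Z.of_nat (S N)).
Proof.
  rewrite !Zfinsum_Zrange_sum. replace (2 * S N)%nat with (S (S (2 * N))) by lia.
  rewrite Zrange_sum_S, Zrange_sum_Sl. replace (- Z.of_nat (S N) + 1)%Z with (- Z.of_nat N)%Z by lia.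
  do 3 f_equal. lia.
Qed.

Lemma Zfinsum_le_S f N : (forall i, 0 <= f i) -> Zfinsum N f <= Zfinsum (S N) f.
Proof. intros H. rewrite Zfinsum_S. pose proof (H (- Z.of_nat (S N))%Z). pose proof (H (Z.of_nat (S N))). lra. Qed.

Lemma Zfinsum_shift_le_S f N : (forall i, 0 <= f i) -> Zfinsum N (fun i => f (i - 1)%Z) <= Zfinsum (S N) f.
Proof.
  intros H. rewrite !Zfinsum_Zrange_sum.
  replace (Zrange_sum (fun i => f (i - 1)%Z) (- Z.of_nat N) (2 * N))
    with (Zrange_sum f (- Z.of_nat (S N)) (2 * N)) by (apply sum_eq; intros; f_equal; lia).
  replace (2 * S N)%nat with (S (S (2 * N))) by lia.
  rewrite !Zrange_sum_S. pose proof (H (- Z.of_nat (S N) + Z.of_nat (S (2 * N)))%Z).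
  pose proof (H (- Z.of_nat (S N) + Z.of_nat (S (S (2 * N))))%Z). lra.
Qed.

Lemma Zfinsum_S_split f n :
  Zfinsum (S n) f = sum_f_R0 (fun k => f (Z.of_nat k)) (S n) + sum_f_R0 (fun k => f (- Z.of_nat (S k))%Z) n.
Proof.
  induction n as [| n IH].
  - rewrite Zfinsum_S. unfold Zfinsum. simpl. ring.
  - rewrite Zfinsum_S, IH, (tech5 (fun k => f (Z.of_nat k)) (S n)), (tech5 (fun k => f (- Z.of_nat (S k))%Z) n).
    ring.
Qed.

Lemma Zfinsum_cvg f l : Zsum f l -> Un_cv (fun N => Zfinsum N f) l.
Proof.
  intros [l1 [l2 [H1 [H2 ->]]]] e He.
  destruct (H1 (e / 2) ltac:(lra)) as [N1 HN1]. destruct (H2 (e / 2) ltac:(lra)) as [N2 HN2].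
  exists (S (N1 + N2)). intros [| n] Hn; [lia |].
  unfold Rdist in *. rewrite Zfinsum_S_split.
  specialize (HN1 (S n) ltac:(lia)). specialize (HN2 n ltac:(lia)).
  match goal with |- Rabs (?A + ?B - _) < _ =>
    replace (A + B - (l1 + l2)) with ((A - l1) + (B - l2)) by ring end.
  eapply Rle_lt_trans; [apply Rabs_triang | lra].
Qed.

(** * A Gronwall lemma with truncated sources *)

Lemma real_induction (P : R -> Prop) t : 0 <= t -> P 0 ->
  (forall s, 0 < s <= t -> (forall r, 0 <= r < s -> P r) -> P s) ->
  (forall s, 0 <= s < t -> P s -> exists h, 0 < h /\ forall r, s < r <= s + h -> r <= t -> P r) ->
  P t.
Proof.
  intros Ht P0 Hleft Hright.
  set (A := fun s => 0 <= s <= t /\ forall r, 0 <= r <= s -> P r).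
  destruct (completeness A) as [sg [Hub Hlub]].
  { exists t. intros x [Hx _]; lra. }
  { exists 0. split; [lra | intros r Hr; replace r with 0 by lra; exact P0]. }
  assert (Hsg0 : 0 <= sg).
  { apply Hub. split; [lra | intros r Hr; replace r with 0 by lra; exact P0]. }
  assert (Hsgt : sg <= t) by (apply Hlub; intros x [Hx _]; lra).
  assert (Hbelow : forall r, 0 <= r < sg -> P r).
  { intros r Hr. apply NNPP. intros HPr. assert (sg <= r); [| lra].
    apply Hlub. intros x [Hx Hx']. apply Rnot_lt_le. intros Hxr. apply HPr, Hx'; lra. }
  assert (Hsg : P sg).
  { destruct (Req_dec sg 0) as [-> | Hne]; [exact P0 | apply Hleft; [lra | exact Hbelow]]. }
  destruct (Req_dec sg t) as [<- | Hne]; [exact Hsg |].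
  destruct (Hright sg ltac:(lra) Hsg) as [h [Hh Hext]].
  pose proof (Rmin_l (sg + h) t). pose proof (Rmin_r (sg + h) t).
  pose proof (Rmin_glb (sg + h) t 0 ltac:(lra) ltac:(lra)).
  assert (Hin : A (Rmin (sg + h) t)).
  { split; [lra |]. intros r Hr.
    destruct (Rlt_le_dec r sg) as [Hl | Hl]; [apply Hbelow; lra |].
    destruct (Req_dec r sg) as [-> | Hne']; [exact Hsg |].
    apply Hext; lra. }
  apply Hub in Hin. revert Hin. unfold Rmin. destruct (Rle_dec (sg + h) t); lra.
Qed.

Lemma RiemannInt_ge_const f a b k (pr : Riemann_integrable f a b) :
  a <= b -> (forall x, a < x < b -> k <= f x) -> k * (b - a) <= RiemannInt pr.
Proof.
  intros Hab H. rewrite <- (RiemannInt_P15 (RiemannInt_P14 a b k)).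
  apply RiemannInt_P19; auto.
Qed.

Section Gronwall.

Variables (T : R) (psi : R -> R) (src : nat -> R -> R).
Hypotheses
  (Hint : forall N s, 0 <= s < T -> Riemann_integrable (src N) 0 s)
  (Hpsi0 : within_cont psi T 0)
  (Hder : forall s, 0 < s < T -> forall d, 0 < d ->
            exists N l, derivable_pt_lim psi s l /\ l <= src N s + d)
  (Hpos : forall N s, 0 <= s < T -> 0 <= src N s)
  (Hmon : forall N s, 0 <= s < T -> src N s <= src (S N) s)
  (Hcont : forall N s, 0 < s < T -> continuity_pt (src N) s).

Lemma src_le_mono N N' s : (N <= N')%nat -> 0 <= s < T -> src N s <= src N' s.
Proof.
  intros HN Hs. induction HN as [| N' HN IH]; [lra |].
  eapply Rle_trans; [exact IH | apply Hmon; exact Hs].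
Qed.

Lemma Rint_src_split N a b (pr : Riemann_integrable (src N) a b) :
  0 <= a <= b -> b < T -> Rint (src N) 0 b = Rint (src N) 0 a + RiemannInt pr.
Proof.
  intros Hab HbT.
  rewrite (Rint_eq_RiemannInt _ _ _ (Hint N b ltac:(lra))), (Rint_eq_RiemannInt _ _ _ (Hint N a ltac:(lra))).
  symmetry; apply RiemannInt_P26.
Qed.

Lemma Rint_src_le N a b : 0 <= a <= b -> b < T -> Rint (src N) 0 a <= Rint (src N) 0 b.
Proof.
  intros Hab HbT.
  set (pr := RiemannInt_P23 (Hint N b ltac:(lra)) (conj (proj1 Hab) (proj2 Hab))).
  rewrite (Rint_src_split N a b pr Hab HbT).
  pose proof (RiemannInt_ge_const (src N) a b 0 pr (proj2 Hab) ltac:(intros; apply Hpos; lra)).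
  lra.
Qed.

Lemma Rint_src_0 N : Rint (src N) 0 0 = 0.
Proof. rewrite (Rint_eq_RiemannInt _ _ _ (RiemannInt_P7 (src N) 0)). apply RiemannInt_P9. Qed.

Lemma Rint_src_le_N N N' s : (N <= N')%nat -> 0 <= s < T -> Rint (src N) 0 s <= Rint (src N') 0 s.
Proof.
  intros HN Hs.
  rewrite (Rint_eq_RiemannInt _ _ _ (Hint N s Hs)), (Rint_eq_RiemannInt _ _ _ (Hint N' s Hs)).
  apply RiemannInt_P19; [lra |]. intros; apply src_le_mono; [exact HN | lra].
Qed.

(* Bound at time [s] up to an arbitrary [eta], with a slack [dl (s + 1)] growing in time. *)
Let approx_bound dl s :=
  forall eta, 0 < eta -> exists N, psi s <= psi 0 + Rint (src N) 0 s + eta + dl * (s + 1).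

Lemma approx_bound_left dl s :
  0 < dl -> 0 < s < T -> (forall r, 0 <= r < s -> approx_bound dl r) -> approx_bound dl s.
Proof.
  intros Hdl Hs Hbelow eta Heta.
  destruct (Hder s Hs 1 ltac:(lra)) as [N [l [Hl _]]].
  destruct (derivable_continuous_pt _ _ (exist _ l Hl) (eta / 2) ltac:(lra)) as [al [Hal Hclose]].
  set (r := Rmax 0 (s - al / 2)).
  assert (Hr : 0 <= r < s) by (unfold r; apply Rmax_case_strong; intros; lra).
  destruct (Hbelow r Hr (eta / 2) ltac:(lra)) as [N' HN']. exists N'.
  assert (Rabs (psi r - psi s) < eta / 2).
  { apply Hclose. split; [split; [exact I | lra] |].
    simpl; unfold Rdist. rewrite Rabs_left by lra. unfold r; apply Rmax_case_strong; intros; lra. }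
  apply Rlt_le, Rabs_le_inv in H.
  pose proof (Rint_src_le N' r s ltac:(lra) ltac:(lra)).
  assert (dl * (r + 1) <= dl * (s + 1)) by (apply Rmult_le_compat_l; lra).
  lra.
Qed.

Lemma approx_bound_right_0 dl : 0 < dl -> 0 < T ->
  exists h, 0 < h /\ forall r, 0 < r <= h -> r < T -> approx_bound dl r.
Proof.
  intros Hdl HT.
  destruct (Hpsi0 dl Hdl) as [al [Hal Hclose]].
  exists (al / 2). split; [lra |]. intros r Hr HrT eta Heta. exists 0%nat.
  assert (Rabs (psi r - psi 0) < dl).
  { apply Hclose. split; [lra |]. simpl; unfold Rdist. rewrite Rminus_0_r, Rabs_right; lra. }
  apply Rlt_le, Rabs_le_inv in H.
  pose proof (Rint_src_le 0 0 r ltac:(lra) HrT). rewrite Rint_src_0 in H0.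
  assert (0 <= dl * r) by (apply Rmult_le_pos; lra).
  lra.
Qed.

Lemma approx_bound_right dl s : 0 < dl -> 0 < s < T -> approx_bound dl s ->
  exists h, 0 < h /\ forall r, s < r <= s + h -> r < T -> approx_bound dl r.
Proof.
  intros Hdl Hs Hbound.
  destruct (Hder s Hs (dl / 4) ltac:(lra)) as [N [l [Hl Hll]]].
  destruct (Hcont N s Hs (dl / 4) ltac:(lra)) as [a1 [Ha1 Hsrc]].
  destruct (Hl (dl / 4) ltac:(lra)) as [dlt Hdlt].
  set (h := Rmin a1 dlt / 2).
  assert (Hh : 0 < h /\ h < a1 /\ h < dlt).
  { pose proof (cond_pos dlt). pose proof (Rmin_l a1 dlt). pose proof (Rmin_r a1 dlt).
    unfold h; split; [apply Rmin_case |]; lra. }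
  exists h. split; [lra |]. intros r Hr HrT eta Heta.
  set (hh := r - s).
  (* Over [s, r], [psi] grows at most like [src N s + dl / 2], ... *)
  assert (Hpsi : psi r - psi s <= hh * (src N s + dl / 2)).
  { assert (hh <> 0) by (unfold hh; lra).
    assert (Rabs hh < dlt) by (rewrite Rabs_right; unfold hh; lra).
    specialize (Hdlt hh H H0). replace (s + hh) with r in Hdlt by (unfold hh; ring).
    apply Rlt_le, Rabs_le_inv in Hdlt as [_ Hd2].
    assert ((psi r - psi s) / hh <= src N s + dl / 2) by lra.
    apply (Rmult_le_compat_l hh) in H1; [| unfold hh; lra].
    replace (hh * ((psi r - psi s) / hh)) with (psi r - psi s) in H1 by (field; exact H).
    lra. }
  destruct (Hbound eta Heta) as [N' HN'].
  set (N'' := Nat.max N N').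
  assert (Hsr : 0 <= s <= r) by lra.
  set (pr := RiemannInt_P23 (Hint N'' r ltac:(lra)) Hsr).
  (* ... while [src N''] stays above [src N s - dl / 4] there. *)
  assert (Hge : (src N s - dl / 4) * hh <= RiemannInt pr).
  { apply RiemannInt_ge_const; [lra |]. intros x Hx.
    assert (src N x <= src N'' x) by (apply src_le_mono; [unfold N''; lia | lra]).
    assert (Rabs (src N x - src N s) < dl / 4).
    { destruct (Req_dec x s) as [-> | Hne]; [rewrite Rminus_diag, Rabs_R0; lra |].
      apply Hsrc. split; [split; [exact I | exact (not_eq_sym Hne)] |]. simpl; unfold Rdist.
      rewrite Rabs_right; lra. }
    apply Rlt_le, Rabs_le_inv in H0. lra. }
  pose proof (Rint_src_split N'' s r pr Hsr HrT).
  pose proof (Rint_src_le_N N' N'' s ltac:(unfold N''; lia) ltac:(lra)).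
  exists N''.
  assert (dl * (s + 1) + 3 / 4 * dl * hh <= dl * (r + 1)) by (unfold hh; nra).
  nra.
Qed.

Lemma increment_le_of_derivative_le t C0 : 0 <= t < T ->
  (forall N s, 0 <= s < T -> Rint (src N) 0 s <= C0) -> psi t <= psi 0 + C0.
Proof.
  intros Ht Hbd.
  (* Let the slack [dl] go to zero. *)
  cut (forall dl, 0 < dl -> psi t <= psi 0 + C0 + dl * (t + 2)).
  { intros H. apply Rnot_lt_le. intros Hlt.
    set (dl := (psi t - (psi 0 + C0)) / (2 * (t + 2))).
    assert (0 < dl) by (apply Rdiv_lt_0_compat; lra).
    specialize (H dl H0).
    replace (dl * (t + 2)) with ((psi t - (psi 0 + C0)) / 2) in H by (unfold dl; field; lra).
    lra. }
  intros dl Hdl.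
  assert (Hinv : approx_bound dl t).
  { apply real_induction; [lra | | |].
    - intros eta Heta. exists 0%nat. rewrite Rint_src_0. lra.
    - intros s Hs Hbelow. apply approx_bound_left; [exact Hdl | lra | exact Hbelow].
    - intros s Hs Hbound. destruct (Req_dec s 0) as [-> | Hne].
      + destruct (approx_bound_right_0 dl Hdl ltac:(lra)) as [h [Hh Hr]].
        exists h. split; [exact Hh | intros r Hr1 Hr2; apply Hr; lra].
      + destruct (approx_bound_right dl s Hdl ltac:(lra) Hbound) as [h [Hh Hr]].
        exists h. split; [exact Hh | intros r Hr1 Hr2; apply Hr; lra]. }
  destruct (Hinv dl Hdl) as [N HN]. specialize (Hbd N t Ht). lra.
Qed.

End Gronwall.

Lemma continuity_pt_sqr f x : continuity_pt f x -> continuity_pt (fun y => f y ^ 2) x.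
Proof.
  intros H. apply (continuity_pt_locally_ext (fun y => f y * f y) _ 1); [lra | intros; ring |].
  exact (continuity_pt_mult f f x H H).
Qed.

Lemma continuity_pt_const_fun (a x : R) : continuity_pt (fun _ => a) x.
Proof. apply continuity_pt_const. intros u v; reflexivity. Qed.

Ltac continuity_rec :=
  lazymatch goal with
  | |- continuity_pt (fun s => @?f s + @?g s) _ => apply (continuity_pt_plus f g); continuity_rec
  | |- continuity_pt (fun s => @?f s - @?g s) _ => apply (continuity_pt_minus f g); continuity_rec
  | |- continuity_pt (fun s => @?f s * @?g s) _ => apply (continuity_pt_mult f g); continuity_rec
  | |- continuity_pt (fun s => @?f s / ?a) _ => apply (continuity_pt_mult f (fun _ => / a)); continuity_rec
  | |- continuity_pt (fun s => (@?f s) ^ 2) _ => apply (continuity_pt_sqr f); continuity_rec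
  | |- continuity_pt (fun _ => ?a) _ => apply continuity_pt_const_fun
  | _ => idtac
  end.

(* [F] is continuous on [[0, T)], one-sidedly at [0]: the extension [F (max 0 y)] is continuous there. *)
Definition continuous_on_0T (T : R) (F : R -> R) : Prop :=
  forall x, 0 <= x < T -> continuity_pt (fun y => F (Rmax 0 y)) x.

Lemma continuous_on_0T_within T F :
  (forall y, 0 <= y < T -> within_cont F T y) -> continuous_on_0T T F.
Proof.
  intros H x Hx e He.
  destruct (H x Hx e He) as [al [Hal Hclose]].
  exists (Rmin al (T - x)). split; [apply Rmin_case; lra |].
  intros y [_ Hy]. simpl in *. unfold Rdist in *.
  pose proof (Rmin_l al (T - x)). pose proof (Rmin_r al (T - x)).
  pose proof (Rle_abs (y - x)). pose proof (Rle_abs (- (y - x))). rewrite Rabs_Ropp in *.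
  rewrite (Rmax_right 0 x) by lra.
  apply Hclose. unfold Rmax. destruct (Rle_dec 0 y); split; simpl; unfold Rdist; try lra.
  rewrite !Rabs_left1 by lra. lra.
Qed.

Lemma continuous_on_0T_ext T F G : (forall r, F r = G r) -> continuous_on_0T T F -> continuous_on_0T T G.
Proof.
  intros E H x Hx. apply (continuity_pt_locally_ext (fun y => F (Rmax 0 y)) _ 1); [lra | | apply H; lra].
  intros; apply E.
Qed.

Lemma continuous_on_0T_interior T F s : continuous_on_0T T F -> 0 < s < T -> continuity_pt F s.
Proof.
  intros H Hs. apply (continuity_pt_locally_ext (fun y => F (Rmax 0 y)) _ s); [lra | | apply H; lra].
  intros y Hy. unfold Rdist in Hy. apply Rlt_le, Rabs_le_inv in Hy. rewrite Rmax_right by lra. reflexivity.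
Qed.

Lemma continuous_on_0T_integrable T F s : continuous_on_0T T F -> 0 <= s < T -> Riemann_integrable F 0 s.
Proof.
  intros H Hs.
  assert (HI : Riemann_integrable (fun y => F (Rmax 0 y)) 0 s)
    by (apply continuity_implies_RiemannInt; [lra | intros; apply H; lra]).
  intros e. destruct (HI e) as [phi [psi [Hphi Hpsi]]]. exists phi, psi. split; [| exact Hpsi].
  intros y Hy. rewrite Rmin_left, Rmax_right in Hy by lra.
  specialize (Hphi y). rewrite Rmin_left, Rmax_right, (Rmax_right 0 y) in Hphi by lra. apply Hphi; lra.
Qed.

Lemma continuous_on_0T_Zfinsum T (F : Z -> R -> R) N :
  (forall i, continuous_on_0T T (F i)) -> continuous_on_0T T (fun r => Zfinsum N (fun i => F i r)).
Proof.
  intros H x Hx. unfold Zfinsum. induction (2 * N)%nat as [| n IH]; simpl.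
  - apply H; exact Hx.
  - apply (continuity_pt_plus _ (fun y => F (Z.of_nat (S n) - Z.of_nat N)%Z (Rmax 0 y))); [exact IH | apply H; exact Hx].
Qed.

Lemma Riemann_integrable_ext F G a b :
  (forall x, Rmin a b <= x <= Rmax a b -> F x = G x) -> Riemann_integrable G a b -> Riemann_integrable F a b.
Proof.
  intros E H e. destruct (H e) as [phi [psi [H1 H2]]]. exists phi, psi. split; [| exact H2].
  intros x Hx. rewrite E; auto.
Qed.

Lemma Rint_lin_comb F A B a b s (HA : Riemann_integrable A 0 s) (HB : Riemann_integrable B 0 s) :
  0 <= s -> (forall r, F r = a * A r + b * B r) -> Rint F 0 s = a * RiemannInt HA + b * RiemannInt HB.
Proof.
  intros Hs E.
  set (H0 := RiemannInt_P14 0 s 0).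
  set (HaA := @RiemannInt_P10 (fct_cte 0) A 0 s a H0 HA).
  set (HF := @RiemannInt_P10 _ B 0 s b HaA HB).
  assert (HF' : Riemann_integrable F 0 s)
    by (refine (Riemann_integrable_ext _ _ _ _ _ HF); intros; rewrite E; unfold fct_cte; ring).
  rewrite (Rint_eq_RiemannInt _ _ _ HF').
  rewrite (RiemannInt_P18 HF' HF Hs) by (intros; rewrite E; unfold fct_cte; ring).
  rewrite (RiemannInt_P13 HaA HB HF), (RiemannInt_P13 H0 HA HaA), (RiemannInt_P15 H0). ring.
Qed.

Lemma within_cont_mult_continuous F G T t :
  within_cont F T t -> continuity_pt G t -> within_cont (fun s => F s * G s) T t.
Proof.
  intros HF HG. apply limit_mul; [exact HF |].
  intros e He. destruct (HG e He) as [al [Hal Hclose]]. exists al. split; [exact Hal |].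
  intros y [_ Hy]. destruct (Req_dec y t) as [-> | Hne].
  - simpl; unfold Rdist. rewrite Rminus_diag, Rabs_R0. exact He.
  - apply Hclose. split; [split; [exact I | exact (not_eq_sym Hne)] | exact Hy].
Qed.

Lemma Un_cv_eq u l1 l2 : Un_cv u l1 -> l1 = l2 -> Un_cv u l2.
Proof. now intros ? <-. Qed.

Lemma Un_cv_ext u v l : (forall n, u n = v n) -> Un_cv u l -> Un_cv v l.
Proof. intros E H e He. destruct (H e He) as [N HN]. exists N. intros n Hn. rewrite <- E. auto. Qed.

Lemma Un_cv_const (a : R) : Un_cv (fun _ => a) a.
Proof. intros e He. exists 0%nat. intros. unfold Rdist. rewrite Rminus_diag, Rabs_R0. exact He. Qed.

Lemma Un_cv_S u l : Un_cv u l -> Un_cv (fun n => u (S n)) l.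
Proof. intros H e He. destruct (H e He) as [N HN]. exists N. intros n Hn. apply HN. lia. Qed.

Lemma Un_cv_Z_right (v : Z -> R) L : Un_cv (fun n => v (Z.of_nat n)) L ->
  Un_cv (fun n => v (Z.of_nat n + 1 - 1)%Z) L /\ Un_cv (fun n => v (Z.of_nat n + 1)%Z) L.
Proof.
  intros H. split.
  - apply (Un_cv_ext (fun n => v (Z.of_nat n))); [intros n; f_equal; lia | exact H].
  - apply (Un_cv_ext (fun n => v (Z.of_nat (S n)))); [intros n; f_equal; lia | exact (Un_cv_S _ _ H)].
Qed.

Lemma Un_cv_Z_left (v : Z -> R) L : Un_cv (fun n => v (- Z.of_nat n)%Z) L ->
  Un_cv (fun n => v (- Z.of_nat n - 1)%Z) L /\ Un_cv (fun n => v (- Z.of_nat n)%Z) L.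
Proof.
  intros H. split; [| exact H].
  apply (Un_cv_ext (fun n => v (- Z.of_nat (S n))%Z)); [intros n; f_equal; lia | exact (Un_cv_S _ _ H)].
Qed.

Ltac cvg_rec :=
  lazymatch goal with
  | |- Un_cv (fun n => @?f n + @?g n) _ => eapply Un_cv_eq; [apply (CV_plus f g); cvg_rec | reflexivity]
  | |- Un_cv (fun n => @?f n - @?g n) _ => eapply Un_cv_eq; [apply (CV_minus f g); cvg_rec | reflexivity]
  | |- Un_cv (fun n => @?f n * @?g n) _ => eapply Un_cv_eq; [apply (CV_mult f g); cvg_rec | reflexivity]
  | |- Un_cv (fun n => @?f n / ?a) _ =>
      eapply Un_cv_eq; [apply (CV_mult f (fun _ => / a)); cvg_rec | reflexivity]
  | |- Un_cv (fun n => - @?f n) _ => eapply Un_cv_eq; [apply (CV_opp f); cvg_rec | reflexivity]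
  | |- Un_cv (fun _ => ?a) _ => apply Un_cv_const
  | _ => idtac
  end.

Lemma entropy_flux_cvg p dp lam dx eps (tau u taub ub : Z -> R) (k : nat -> Z) L :
  continuity_pt p L -> continuity_pt dp L ->
  Un_cv (fun n => tau (k n - 1)%Z) L -> Un_cv (fun n => tau (k n)) L ->
  Un_cv (fun n => taub (k n - 1)%Z) L -> Un_cv (fun n => taub (k n)) L ->
  Un_cv (fun n => u (k n - 1)%Z) 0 -> Un_cv (fun n => u (k n)) 0 ->
  Un_cv (fun n => ub (k n - 1)%Z) 0 -> Un_cv (fun n => ub (k n)) 0 ->
  Un_cv (fun n => entropy_flux p dp lam dx eps tau u taub ub (k n)) 0.
Proof.
  intros Cp Cdp H1 H2 H3 H4 H5 H6 H7 H8. unfold entropy_flux. cbv zeta.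
  eapply Un_cv_eq; [cvg_rec; first [eassumption | apply continuity_seq; eassumption] |].
  unfold Rdiv; ring.
Qed.

(** * The relative entropy estimate *)

Definition rate_const (c D1 D2 K sigma : R) : R :=
  D2 * K / sigma + sqrt D1 * K * (2 * D2 + 2 * D1 / c).

Lemma rate_const_nonneg c D1 D2 K sigma :
  0 < c -> 0 <= D1 -> 0 <= D2 -> 0 <= K -> 0 < sigma -> 0 <= rate_const c D1 D2 K sigma.
Proof.
  intros Hc HD1 HD2 HK Hsig.
  assert (0 <= D1 / c) by (apply Rdiv_nonneg_pos; lra).
  pose proof (sqrt_pos D1).
  unfold rate_const. apply Rplus_le_le_0_compat; [apply Rdiv_nonneg_pos; [nra | lra] |].
  apply Rmult_le_pos; [nra | lra].
Qed.

Definition entropy_source (dp : R -> R) (sigma D1 eps dx : R) (ub taub dtaub : Z -> R -> R)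
  (s : R) (i : Z) : R :=
  eps ^ 4 * dx * (D1 / (4 * sigma) * Dxx dx ub i s ^ 2
                  + Dtx_tilde dx (fun j t => dp (taub j t) * dtaub j t) i s ^ 2 / sigma ^ 3).

Definition at_time (v : Z -> R -> R) (s : R) : Z -> R := fun j => v j s.

Section Estimate.

Variables (p dp d2p : R -> R) (sigma c M K m D1 D2 : R).
Hypotheses (Hp : pressure_law p dp d2p) (Hsig : 0 < sigma) (Hc : 0 < c) (HcM : c < M) (Hm0 : 0 < m)
  (Hm : forall x, c <= x <= M -> m <= - dp x)
  (Hd1 : forall x, c <= x <= M -> Rabs (dp x) <= D1)
  (Hd2 : forall x, c / 2 <= x <= M + c / 2 -> Rabs (d2p x) <= D2).

Let HD1 : 0 <= D1 := bound_nonneg dp c M D1 ltac:(lra) Hd1.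
Let HD2 : 0 <= D2 := bound_nonneg d2p (c / 2) (M + c / 2) D2 ltac:(lra) Hd2.

Variables (tstar T eps dx lam : R) (tau u taub ub dtau du dtaub dub : Z -> R -> R) (Phi : R -> R).
Hypothesis HS : setting p dp tstar sigma c M K T eps dx lam tau u taub ub dtau du dtaub dub Phi.

Ltac unpack :=
  destruct HS as (Hts & HT & Heps & Hdx & Hdx1 & Hlam & HC1 & HH & HPt & HPu & Hbnd & Hlim & _
                  & HPhi & HPhi0 & HdPhi & HL2a & HLia & _ & HLic & HL2b).

Lemma lambda_bounds : 0 <= lam <= sqrt D1.
Proof.
  unpack. destruct Hlam as [Hub Hlub]. split.
  - apply Rle_trans with (sqrt (- dp (tau 0%Z (T / 2)))); [apply sqrt_pos |].
    apply Hub. exists (T / 2), 0%Z. split; [lra | reflexivity].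
  - apply Hlub. intros y [t [i [Ht ->]]]. apply sqrt_le_1_alt.
    pose proof (Hd1 (tau i t) (proj1 (Hbnd i t ltac:(lra)))) as H.
    pose proof (Rle_abs (- dp (tau i t))). rewrite Rabs_Ropp in *. lra.
Qed.

Lemma K_nonneg : 0 <= K.
Proof. unpack. exact (proj1 HL2b). Qed.

Lemma entropy_density_lower i s : 0 <= s < T ->
  dx * (m / 2) * (tau i s - taub i s) ^ 2 <= dx * eta p tstar eps tau u taub ub i s.
Proof.
  intros Hs. unpack. destruct (Hbnd i s Hs) as [H1 H2].
  pose proof (Prel_coercive p dp d2p Hp c M m Hc Hm tstar (tau i s) (taub i s) Hts H1 H2).
  pose proof (pow2_ge_0 (u i s - ub i s)). pose proof (pow2_ge_0 eps).
  unfold eta. rewrite Rmult_assoc. apply Rmult_le_compat_l; nra.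
Qed.

Lemma entropy_density_nonneg i s : 0 <= s < T -> 0 <= dx * eta p tstar eps tau u taub ub i s.
Proof.
  intros Hs. eapply Rle_trans; [| exact (entropy_density_lower i s Hs)].
  unpack. apply Rmult_le_pos; [apply Rmult_le_pos |]; try lra. apply pow2_ge_0.
Qed.

Lemma Phi_nonneg s : 0 <= s < T -> 0 <= Phi s.
Proof.
  intros Hs. unpack.
  apply (@Rle_cv_lim (fun _ => 0) (fun N => Zfinsum N (fun i => dx * eta p tstar eps tau u taub ub i s))).

  - intros N. apply Zfinsum_nonneg. intros i; apply entropy_density_nonneg; exact Hs.
  - apply Un_cv_const.
  - apply Zfinsum_cvg, HPhi, Hs.
Qed.

Let rate s := entropy_rate p dp dx eps (at_time tau s) (at_time u s) (at_time taub s) (at_time ub s)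
                (at_time dtau s) (at_time du s) (at_time dtaub s) (at_time dub s).
Let flux s := entropy_flux p dp lam dx eps (at_time tau s) (at_time u s) (at_time taub s) (at_time ub s).
Let source s := entropy_source dp sigma D1 eps dx ub taub dtaub s.

Lemma entropy_density_derivative i s : 0 < s < T ->
  derivable_pt_lim (fun r => dx * eta p tstar eps tau u taub ub i r) s (rate s i).
Proof.
  intros Hs. unpack.
  destruct (HC1 i) as [[Ht _] [[Hu _] [[Htb _] [Hub _]]]].
  specialize (Ht s Hs). specialize (Hu s Hs). specialize (Htb s Hs). specialize (Hub s Hs).
  destruct (Hbnd i s ltac:(lra)) as [Hb1 Hb2].
  assert (HP : forall x, 0 < x -> derivable_pt_lim (Ppot p tstar) x (p x))
    by (intros; apply Ppot_derivable; [intros; apply (p_continuous p dp d2p Hp) | |]; lra).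
  unfold eta, Prel, rate, entropy_rate, at_time.
  derive; try eassumption.
  - apply (derivable_pt_lim_comp (tau i) (Ppot p tstar)); [exact Ht | apply HP; lra].
  - apply (derivable_pt_lim_comp (taub i) (Ppot p tstar)); [exact Htb | apply HP; lra].
  - apply (derivable_pt_lim_comp (taub i) p); [exact Htb | apply (p_derivable p dp d2p Hp); lra].
  - ring.
Qed.

Lemma parabolic_velocity_rate i s : 0 < s < T ->
  sigma * dub i s = - Dtx_tilde dx (fun j t => dp (taub j t) * dtaub j t) i s.
Proof.
  intros Hs. unpack.
  destruct (HC1 i) as [_ [_ [_ [Hub _]]]].
  destruct (HC1 (i + 1)%Z) as [_ [_ [[Htp _] _]]]. destruct (HC1 (i - 1)%Z) as [_ [_ [[Htm _] _]]].
  destruct (Hbnd (i + 1)%Z s ltac:(lra)) as [_ Hbp]. destruct (Hbnd (i - 1)%Z s ltac:(lra)) as [_ Hbm].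
  (* Differentiate the algebraic relation [sigma ub = - centred difference of p (taub)] in time. *)
  assert (D1' : derivable_pt_lim (fun r => sigma * ub i r) s (sigma * dub i s)).
  { derive; [exact (Hub s Hs) | ring]. }
  assert (D2' : derivable_pt_lim (fun r => sigma * ub i r) s
                  (- (dp (taub (i + 1)%Z s) * dtaub (i + 1)%Z s - dp (taub (i - 1)%Z s) * dtaub (i - 1)%Z s)
                   * / (2 * dx))).
  { apply (derivable_pt_lim_locally_ext (fun r => - (p (taub (i + 1)%Z r) - p (taub (i - 1)%Z r)) * / (2 * dx))
             _ s 0 T); [exact Hs | intros r Hr; rewrite (HPu i r ltac:(lra)); reflexivity |].
    derive.
    - apply (derivable_pt_lim_comp (taub (i + 1)%Z) p); [exact (Htp s Hs) | apply (p_derivable p dp d2p Hp); lra].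
    - apply (derivable_pt_lim_comp (taub (i - 1)%Z) p); [exact (Htm s Hs) | apply (p_derivable p dp d2p Hp); lra].
    - ring. }
  rewrite (uniqueness_limite _ _ _ _ D1' D2'). unfold Dtx_tilde, Rdiv. ring.
Qed.

Lemma entropy_rate_le i s : 0 < s < T ->
  rate s i <= dx * (flux s (i + 1)%Z - flux s i)
              + rate_const c D1 D2 K sigma * dx
                * ((tau (i - 1)%Z s - taub (i - 1)%Z s) ^ 2 + (tau i s - taub i s) ^ 2)
              + source s i.
Proof.
  intros Hs.
  pose proof (parabolic_velocity_rate i s Hs) as Hdub. pose proof lambda_bounds as Hlam0.
  pose proof K_nonneg as HK. unpack.
  assert (HDx : Rabs (taub i s - taub (i - 1)%Z s) <= K * dx).
  { pose proof (HLic (i - 1)%Z s ltac:(lra)) as H. unfold Defs.Dx in H.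
    replace (i - 1 + 1)%Z with i in H by lia.
    replace (taub i s - taub (i - 1)%Z s) with ((taub i s - taub (i - 1)%Z s) / dx * dx) by (field; lra).
    rewrite Rabs_mult, (Rabs_right dx) by lra. apply Rmult_le_compat_r; lra. }
  destruct (HH i s Hs) as [Hdtau Hdu].
  pose proof (local_entropy_balance p dp d2p Hp c M D1 D2 Hc HcM Hd1 Hd2 K (sqrt D1) lam dx eps sigma
                (at_time tau s) (at_time u s) (at_time taub s) (at_time ub s)
                (at_time dtau s) (at_time du s) (at_time dtaub s) (at_time dub s)
                (Dtx_tilde dx (fun j t => dp (taub j t) * dtaub j t) i s) i
                HK Hlam0 Hdx Hdx1 Heps Hsig (fun j => Hbnd j s ltac:(lra)) HDx (HLia i s ltac:(lra))
                (fun j => HPu j s ltac:(lra)) Hdtau Hdu (HPt i s Hs) Hdub) as Hbal.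
  rewrite pow2_sqrt in Hbal by exact HD1.
  exact Hbal.
Qed.

Lemma flux_vanishes_at_infinity s : 0 <= s < T ->
  Un_cv (fun n => flux s (Z.of_nat n + 1)%Z) 0 /\ Un_cv (fun n => flux s (- Z.of_nat n)%Z) 0.
Proof.
  intros Hs. unpack.
  destruct Hlim as [taum [taup [Htaum [Htaup Hl]]]].
  destruct (Hl s Hs) as (L1 & L2 & L3 & L4 & L5 & L6 & L7 & L8).
  split.
  - apply (entropy_flux_cvg _ _ _ _ _ _ _ _ _ (fun n => Z.of_nat n + 1)%Z taup);
      [apply (p_continuous p dp d2p Hp); lra | apply (dp_continuous p dp d2p Hp); lra | ..];
      first [apply (Un_cv_Z_right (at_time tau s)) | apply (Un_cv_Z_right (at_time taub s))
            | apply (Un_cv_Z_right (at_time u s)) | apply (Un_cv_Z_right (at_time ub s))]; assumption.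
  - apply (entropy_flux_cvg _ _ _ _ _ _ _ _ _ (fun n => - Z.of_nat n)%Z taum);
      [apply (p_continuous p dp d2p Hp); lra | apply (dp_continuous p dp d2p Hp); lra | ..];
      first [apply (Un_cv_Z_left (at_time tau s)) | apply (Un_cv_Z_left (at_time taub s))
            | apply (Un_cv_Z_left (at_time u s)) | apply (Un_cv_Z_left (at_time ub s))]; assumption.
Qed.

Lemma partial_entropy_rate_le s g N : 0 < s < T ->
  (forall i, derivable_pt_lim (fun r => dx * eta p tstar eps tau u taub ub i r) s (g i)) ->
  Zfinsum N g <= dx * (flux s (Z.of_nat N + 1)%Z - flux s (- Z.of_nat N)%Z)
                 + 4 * rate_const c D1 D2 K sigma / m
                   * Zfinsum (S N) (fun i => dx * eta p tstar eps tau u taub ub i s)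
                 + Zfinsum N (source s).
Proof.
  intros Hs Hg.
  set (C := rate_const c D1 D2 K sigma).
  assert (HC : 0 <= C) by exact (rate_const_nonneg c D1 D2 K sigma Hc HD1 HD2 K_nonneg Hsig).
  set (e := fun i => dx * eta p tstar eps tau u taub ub i s).
  assert (He : forall i, 0 <= e i) by (intros; apply entropy_density_nonneg; lra).
  (* The quadratic terms of the local balance are absorbed by the coercivity of the entropy. *)
  assert (Hw : forall i, C * dx * (tau i s - taub i s) ^ 2 <= 2 * C / m * e i).
  { intros i. pose proof (entropy_density_lower i s ltac:(lra)) as H.
    apply (Rmult_le_compat_l (2 * C / m)) in H; [| apply Rdiv_nonneg_pos; lra].
    eapply Rle_trans; [| exact H]. right. field. lra. }
  assert (Hgi : forall i, g i <= dx * (flux s (i + 1)%Z - flux s i) + 2 * C / m * (e (i - 1)%Z + e i) + source s i).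
  { intros i. rewrite (uniqueness_limite _ _ _ _ (Hg i) (entropy_density_derivative i s Hs)).
    pose proof (entropy_rate_le i s Hs). pose proof (Hw (i - 1)%Z). pose proof (Hw i). fold C in H. lra. }
  eapply Rle_trans; [apply Zfinsum_le; exact Hgi |].
  rewrite !Zfinsum_plus, Zfinsum_scal, Zfinsum_telescope, Zfinsum_scal, Zfinsum_plus.
  pose proof (Zfinsum_shift_le_S e N He). pose proof (Zfinsum_le_S e N He).
  assert (0 <= 2 * C / m) by (apply Rdiv_nonneg_pos; lra).
  assert (2 * C / m * Zfinsum N (fun i => e (i - 1)%Z) <= 2 * C / m * Zfinsum (S N) e)
    by (apply Rmult_le_compat_l; assumption).
  assert (2 * C / m * Zfinsum N e <= 2 * C / m * Zfinsum (S N) e) by (apply Rmult_le_compat_l; assumption).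
  replace (4 * C / m) with (2 * (2 * C / m)) by (field; lra).
  lra.
Qed.

Lemma Phi_derivative_le s d : 0 < s < T -> 0 < d ->
  exists N l, derivable_pt_lim Phi s l /\
              l <= 4 * rate_const c D1 D2 K sigma / m * Phi s + Zfinsum N (source s) + d.
Proof.
  intros Hs Hd.
  destruct (ltac:(unpack; exact HdPhi) s Hs) as [g [l [Hg [Hl HPhi']]]].
  set (B := 4 * rate_const c D1 D2 K sigma / m).
  set (e := fun i => dx * eta p tstar eps tau u taub ub i s).
  destruct (flux_vanishes_at_infinity s ltac:(lra)) as [Fr Fl].
  assert (HPhi : Zsum e (Phi s)) by (unpack; apply HPhi; lra).
  assert (Hw : Un_cv (fun N => Zfinsum N g - dx * (flux s (Z.of_nat N + 1)%Z - flux s (- Z.of_nat N)%Z)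
                               - B * Zfinsum (S N) e) (l - B * Phi s)).
  { eapply Un_cv_eq.
    - cvg_rec; first [apply Zfinsum_cvg; exact Hl | exact Fr | exact Fl
                     | exact (Un_cv_S _ _ (Zfinsum_cvg e _ HPhi))].
    - ring. }
  destruct (Hw d Hd) as [N HN]. exists N, l. split; [exact HPhi' |].
  specialize (HN N (le_n N)). unfold Rdist in HN. apply Rlt_le, Rabs_le_inv in HN.
  pose proof (partial_entropy_rate_le s g N Hs Hg). fold B e in H.
  lra.
Qed.

Lemma parabolic_continuous j :
  continuous_on_0T T (ub j) /\ continuous_on_0T T (taub j) /\ continuous_on_0T T (dtaub j).
Proof.
  unpack. destruct (HC1 j) as [_ [_ [[_ Htb] [_ Hub]]]].
  split; [| split]; apply continuous_on_0T_within; intros y Hy;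
    [apply (Hub y Hy) | apply (Htb y Hy) | apply (Htb y Hy)].
Qed.

Lemma source_split N r :
  Zfinsum N (source r) =
  eps ^ 4 * (D1 / (4 * sigma)) * Zfinsum N (fun i => dx * Dxx dx ub i r ^ 2)
  + eps ^ 4 / sigma ^ 3 * Zfinsum N (fun i => dx * Dtx_tilde dx (fun j t => dp (taub j t) * dtaub j t) i r ^ 2).
Proof.
  rewrite <- !Zfinsum_scal, <- Zfinsum_plus. apply Zfinsum_ext. intros i.
  unfold source, entropy_source. field. lra.
Qed.

Lemma velocity_integrand_continuous N :
  continuous_on_0T T (fun r => Zfinsum N (fun i => dx * Dxx dx ub i r ^ 2)).
Proof.
  apply continuous_on_0T_Zfinsum. intros i y Hy. unfold Dxx.
  continuity_rec; apply (parabolic_continuous _); exact Hy.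
Qed.

Lemma pressure_integrand_continuous N :
  continuous_on_0T T (fun r => Zfinsum N (fun i => dx * Dtx_tilde dx (fun j t => dp (taub j t) * dtaub j t) i r ^ 2)).
Proof.
  apply continuous_on_0T_Zfinsum. intros i y Hy.
  assert (Hdp : forall j, continuity_pt (fun r => dp (taub j (Rmax 0 r))) y).
  { intros j. apply (continuity_pt_comp (fun r => taub j (Rmax 0 r)) dp);
      [apply (parabolic_continuous j); exact Hy |].
    apply (dp_continuous p dp d2p Hp). unpack.
    assert (Hy' : 0 <= Rmax 0 y < T) by (unfold Rmax; destruct (Rle_dec 0 y); lra).
    destruct (Hbnd j _ Hy') as [_ Hb]. lra. }
  unfold Dtx_tilde. continuity_rec; first [apply Hdp | apply (parabolic_continuous _); exact Hy].
Qed.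

Lemma source_truncation_continuous N : continuous_on_0T T (fun r => Zfinsum N (source r)).
Proof.
  eapply continuous_on_0T_ext; [intros r; symmetry; apply source_split |].
  intros x Hx. continuity_rec;
    [apply velocity_integrand_continuous | apply pressure_integrand_continuous]; exact Hx.
Qed.

Lemma source_truncation_integral_le N s : 0 <= s < T ->
  Rint (fun r => Zfinsum N (source r)) 0 s <= eps ^ 4 * ((D1 / (4 * sigma) + 1 / sigma ^ 3) * K ^ 2).
Proof.
  intros Hs. pose proof K_nonneg.
  set (HA := continuous_on_0T_integrable _ _ s (velocity_integrand_continuous N) Hs).
  set (HB := continuous_on_0T_integrable _ _ s (pressure_integrand_continuous N) Hs).
  rewrite (Rint_lin_comb _ _ _ _ _ s HA HB (proj1 Hs) (source_split N)).
  unpack. destruct HL2a as [_ HA2]. destruct HL2b as [_ HB2].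
  specialize (HA2 N s Hs HB). specialize (HB2 N s Hs HA).
  assert (0 <= eps ^ 4) by (apply pow_le; lra).
  assert (0 <= D1 / (4 * sigma)) by (apply Rdiv_nonneg_pos; lra).
  assert (0 < sigma ^ 3) by (apply pow_lt; lra).
  assert (0 <= eps ^ 4 / sigma ^ 3) by (apply Rdiv_nonneg_pos; lra).
  apply Rle_trans with (eps ^ 4 * (D1 / (4 * sigma)) * K ^ 2 + eps ^ 4 / sigma ^ 3 * K ^ 2).
  - apply Rplus_le_compat; apply Rmult_le_compat_l; try assumption; apply Rmult_le_pos; assumption.
  - right. field. lra.
Qed.

Lemma source_nonneg s i : 0 <= source s i.
Proof.
  unpack. pose proof (pow2_ge_0 (Dxx dx ub i s)).
  pose proof (pow2_ge_0 (Dtx_tilde dx (fun j t => dp (taub j t) * dtaub j t) i s)).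
  assert (0 < sigma ^ 3) by (apply pow_lt; lra).
  unfold source, entropy_source. apply Rmult_le_pos; [apply Rmult_le_pos; [apply pow_le |]; lra |].
  apply Rplus_le_le_0_compat; [apply Rmult_le_pos; [apply Rdiv_nonneg_pos |] | apply Rdiv_nonneg_pos]; lra.
Qed.

Lemma Phi_le_exp t : 0 <= t < T ->
  Phi t <= exp (4 * rate_const c D1 D2 K sigma / m * t)
           * (Phi 0 + eps ^ 4 * ((D1 / (4 * sigma) + 1 / sigma ^ 3) * K ^ 2)).
Proof.
  intros Ht. set (B0 := 4 * rate_const c D1 D2 K sigma / m).
  assert (HB0 : 0 <= B0).
  { apply Rdiv_nonneg_pos; [| lra].
    pose proof (rate_const_nonneg c D1 D2 K sigma Hc HD1 HD2 K_nonneg Hsig). lra. }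
  set (C0 := eps ^ 4 * ((D1 / (4 * sigma) + 1 / sigma ^ 3) * K ^ 2)).
  set (psi := fun s => Phi s * exp (- B0 * s)).
  assert (Hexp_cont : forall s, continuity_pt (fun r => exp (- B0 * r)) s).
  { intros s. apply (continuity_pt_comp (fun r => - B0 * r) exp).
    - apply (continuity_pt_mult (fun _ => - B0) (fun r => r));
        [apply continuity_pt_const_fun | apply derivable_continuous_pt, derivable_pt_id].
    - apply derivable_continuous_pt, derivable_pt_exp. }
  (* The integrating factor [exp (- B0 s)] absorbs the [B0 Phi] term of the derivative bound. *)
  assert (Hpsi : psi t <= psi 0 + C0).
  { apply (increment_le_of_derivative_le T psi (fun N r => Zfinsum N (source r))); try assumption.
    - intros N s Hs. exact (continuous_on_0T_integrable _ _ s (source_truncation_continuous N) Hs).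
    - unfold psi. apply within_cont_mult_continuous; [unpack; exact HPhi0 | apply Hexp_cont].
    - intros s Hs d Hd.
      destruct (Phi_derivative_le s d Hs Hd) as [N [l [HPhi' HN]]]. fold B0 in HN.
      exists N, ((l - B0 * Phi s) * exp (- B0 * s)). split.
      + unfold psi. derive; [exact HPhi' | |].
        * apply (derivable_pt_lim_comp (fun r => - B0 * r) exp);
            [derive; reflexivity | apply derivable_pt_lim_exp].
        * simpl. ring.
      + assert (exp (- B0 * s) <= 1) by (rewrite <- exp_0; apply exp_le_mono; nra).
        pose proof (exp_pos (- B0 * s)).
        assert (0 <= Zfinsum N (source s)) by (apply Zfinsum_nonneg; intros; apply source_nonneg).
        apply Rle_trans with ((Zfinsum N (source s) + d) * exp (- B0 * s)); [apply Rmult_le_compat_r; lra | nra].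
    - intros N s Hs. apply Zfinsum_nonneg. intros; apply source_nonneg.
    - intros N s Hs. apply Zfinsum_le_S. intros; apply source_nonneg.
    - intros N s Hs. exact (continuous_on_0T_interior _ _ s (source_truncation_continuous N) Hs).
    - intros N s Hs. apply source_truncation_integral_le; exact Hs. }
  unfold psi in Hpsi. rewrite Rmult_0_r, exp_0, Rmult_1_r in Hpsi.
  replace (Phi t) with (Phi t * exp (- B0 * t) * exp (B0 * t))
    by (rewrite Rmult_assoc, <- exp_plus; replace (- B0 * t + B0 * t) with 0 by ring; rewrite exp_0; ring).
  rewrite Rmult_comm. apply Rmult_le_compat_l; [apply Rlt_le, exp_pos | exact Hpsi].
Qed.

End Estimate.

Lemma relative_entropy_estimate p dp d2p sigma c M K :
  pressure_law p dp d2p -> 0 < sigma -> 0 < c -> c < M ->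
  exists B, 0 < B /\
    forall tstar T eps dx lam (tau u taub ub dtau du dtaub dub : Z -> R -> R) (Phi : R -> R),
      setting p dp tstar sigma c M K T eps dx lam tau u taub ub dtau du dtaub dub Phi ->
      forall t, 0 <= t < T -> 0 <= Phi t /\ Phi t <= B * exp (B * T) * (Phi 0 + eps ^ 4).
Proof.
  intros Hp Hsig Hc HcM.
  destruct (pressure_constants p dp d2p Hp c M Hc HcM) as (m & D1 & D2 & Hm0 & HD1 & HD2 & Hm & Hd1 & Hd2).
  set (B0 := 4 * rate_const c D1 D2 (Rabs K) sigma / m).
  set (CC := (D1 / (4 * sigma) + 1 / sigma ^ 3) * Rabs K ^ 2).
  assert (HB0 : 0 <= B0).
  { apply Rdiv_nonneg_pos; [| lra].
    pose proof (rate_const_nonneg c D1 D2 (Rabs K) sigma Hc HD1 HD2 (Rabs_pos K) Hsig). lra. }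
  assert (HCC : 0 <= CC).
  { assert (0 < sigma ^ 3) by (apply pow_lt; lra).
    apply Rmult_le_pos; [| apply pow2_ge_0].
    apply Rplus_le_le_0_compat; apply Rdiv_nonneg_pos; lra. }
  exists (1 + B0 + CC). split; [lra |].
  intros tstar T eps dx lam tau u taub ub dtau du dtaub dub Phi HS t Ht.
  assert (HK : 0 <= K) by (eapply K_nonneg; exact HS).
  pose proof (Phi_nonneg p dp d2p sigma c M K m Hp Hc Hm0 Hm _ _ _ _ _ _ _ _ _ _ _ _ _ _ HS) as HPhi.
  pose proof (Phi_le_exp p dp d2p sigma c M K m D1 D2 Hp Hsig Hc HcM Hm0 Hm Hd1 Hd2
                _ _ _ _ _ _ _ _ _ _ _ _ _ _ HS t Ht) as Hle.
  rewrite <- (Rabs_pos_eq K HK) in Hle. fold B0 CC in Hle.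
  split; [exact (HPhi t Ht) |].
  pose proof (HPhi 0 ltac:(lra)). assert (0 <= eps ^ 4) by (apply pow_le; destruct HS as (_ & _ & Heps & _); lra).
  eapply Rle_trans; [exact Hle |].
  apply Rle_trans with (exp ((1 + B0 + CC) * T) * ((1 + B0 + CC) * (Phi 0 + eps ^ 4))); [| right; ring].
  apply Rmult_le_compat; [apply Rlt_le, exp_pos | nra | apply exp_le_mono; nra | nra].
Qed.

Lemma sup_vanishes_of_estimate (B T : R) (Phif : R -> R -> R) : 0 < B ->
  (forall eps, 0 < eps -> forall t, 0 <= t < T ->
     0 <= Phif eps t /\ Phif eps t <= B * exp (B * T) * (Phif eps 0 + eps ^ 4)) ->
  (forall e, 0 < e -> exists d, 0 < d /\ forall eps, 0 < eps < d -> Rabs (Phif eps 0) < e) ->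
  forall e, 0 < e -> exists d, 0 < d /\
    forall eps, 0 < eps < d -> forall t, 0 <= t < T -> Rabs (Phif eps t) <= e.
Proof.
  intros HB Hest H0 e He.
  set (A := B * exp (B * T)).
  assert (HA : 0 < A) by (apply Rmult_lt_0_compat; [exact HB | apply exp_pos]).
  set (e1 := e / (2 * A)).
  assert (He1 : 0 < e1) by (apply Rdiv_lt_0_compat; lra).
  destruct (H0 e1 He1) as [d1 [Hd1 Hsmall]].
  exists (Rmin d1 (Rmin 1 e1)). split; [repeat apply Rmin_case; lra |].
  intros eps Heps t Ht.
  pose proof (Rmin_l d1 (Rmin 1 e1)). pose proof (Rmin_r d1 (Rmin 1 e1)).
  pose proof (Rmin_l 1 e1). pose proof (Rmin_r 1 e1).
  destruct (Hest eps (proj1 Heps) t Ht) as [Hnn Hle].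
  pose proof (Hsmall eps ltac:(lra)) as H0e. pose proof (Rle_abs (Phif eps 0)).
  assert (Hep4 : eps ^ 4 <= eps).
  { assert (eps ^ 3 <= 1) by (rewrite <- (pow1 3); apply pow_incr; lra). simpl in *. nra. }
  rewrite Rabs_right by lra.
  apply Rle_trans with (A * (e1 + e1)).
  - eapply Rle_trans; [exact Hle | apply Rmult_le_compat_l; lra].
  - unfold e1. right. field. lra.
Qed.

Theorem theorem3p1 (p dp d2p : R -> R) (sigma c M K : R)
  (Hp : forall x, 0 < x ->
          derivable_pt_lim p x (dp x) /\ derivable_pt_lim dp x (d2p x) /\
          continuity_pt d2p x /\ 0 < p x /\ dp x < 0)
  (Hsigma : 0 < sigma) (Hc : 0 < c) (HcM : c < M) :
  (exists B : R, 0 < B /\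
     forall (tstar T eps dx lam : R)
            (tau u taub ub dtau du dtaub dub : Z -> R -> R) (Phi : R -> R),
       setting p dp tstar sigma c M K T eps dx lam
               tau u taub ub dtau du dtaub dub Phi ->
       forall t, 0 <= t < T ->
         Phi t <= B * exp (B * T) * (Phi 0 + eps ^ 4)) /\
  (forall (tstar T dx : R) (lamf : R -> R)
          (tauf uf taubf ubf dtauf duf dtaubf dubf : R -> Z -> R -> R)
          (Phif : R -> R -> R),
     (forall eps, 0 < eps ->
        setting p dp tstar sigma c M K T eps dx (lamf eps)
                (tauf eps) (uf eps) (taubf eps) (ubf eps)
                (dtauf eps) (duf eps) (dtaubf eps) (dubf eps) (Phif eps)) ->
     (forall e, 0 < e -> exists d, 0 < d /\
        forall eps, 0 < eps < d -> Rabs (Phif eps 0) < e) ->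
     forall e, 0 < e -> exists d, 0 < d /\
        forall eps, 0 < eps < d ->
          forall t, 0 <= t < T -> Rabs (Phif eps t) <= e).
Proof.
  destruct (relative_entropy_estimate p dp d2p sigma c M K Hp Hsigma Hc HcM) as [B [HB Hest]].
  split.
  - exists B. split; [exact HB |]. intros. eapply Hest; eassumption.
  - intros tstar T dx lamf tauf uf taubf ubf dtauf duf dtaubf dubf Phif HS.
    apply (sup_vanishes_of_estimate B T Phif HB).
    intros eps Heps. exact (Hest _ _ _ _ _ _ _ _ _ _ _ _ _ _ (HS eps Heps)).
Qed.
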